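(* Let $h>0$ and $\alpha>2$, and let $\mathrm{P}_{\mathrm{cov}}^{(\mathrm{C})}(\theta,\lambda)$ and $\mathrm{P}_{\mathrm{cov}}^{(\mathrm{S})}(\theta,\lambda)$ be the coverage probabilities for closest-BS association ($\theta>0$) and strongest-BS association ($\theta\ge1$) with BS density $\lambda$ and BS height $h$, given by $$\mathrm{P}_{\mathrm{cov}}^{(\mathrm{C})}(\theta,\lambda)=\frac{1}{\psi(\theta)+1}e^{-\pi\lambda h^2\psi(\theta)},\qquad \mathrm{P}_{\mathrm{cov}}^{(\mathrm{S})}(\theta,\lambda)=2\pi\lambda\int_h^\infty e^{-\pi\lambda h^2\psi(\theta h^{-\alpha}r^\alpha)}\,r\,dr.$$ Then: (i) $\lim_{\lambda\to0}\mathrm{P}_{\mathrm{cov}}^{(\mathrm{C})}(\theta,\lambda)=\frac{1}{\psi(\theta)+1}$; (ii) $\lim_{\lambda\to0}\mathrm{P}_{\mathrm{cov}}^{(\mathrm{S})}(\theta,\lambda)=\frac{\alpha\sin(2\pi/\alpha)}{2\pi\theta^{2/\alpha}}$; (iii) $\lim_{\lambda\to\infty}\mathrm{P}_{\mathrm{cov}}^{(\mathrm{C})}(\theta,\lambda)=\lim_{\lambda\to\infty}\mathrm{P}_{\mathrm{cov}}^{(\mathrm{S})}(\theta,\lambda)=0$.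
   Context: $\psi(z)=\frac{2z}{\alpha-2}\,{}_2F_1\big(1,1-\tfrac{2}{\alpha};2-\tfrac{2}{\alpha};-z\big)$ for $z>0$, with ${}_2F_1$ the Gauss hypergeometric function. Model: a typical user at the origin of $\mathbb{R}^2$ at ground level; BSs form a homogeneous Poisson point process of intensity $\lambda$, all at height $h$; i.i.d. unit-mean exponential fading; pathloss $(r^2+h^2)^{-\alpha/2}$ with $r$ the horizontal distance; noise neglected. Closest-BS association: served by the horizontally nearest BS, coverage $=\Pr[\mathrm{SIR}>\theta]$; strongest-BS association: coverage $=\Pr[\max_x\mathrm{SIR}_x>\theta]$. The values in (i) and (ii) are the coverage probabilities of the corresponding models with $h=0$. *)

From Stdlib Require Import Reals Lra ClassicalEpsilon.
Open Scope R_scope.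

(* real power x^y for x > 0, set to 0 for x <= 0 (only used with y > 0
   at x = 0, where this is the correct value) *)
Definition rpow (x y : R) : R := if Rlt_dec 0 x then Rpower x y else 0.

Definition Rint (f : R -> R) (a b : R) : R :=
  epsilon (inhabits 0)
    (fun l => exists pr : Riemann_integrable f a b, RiemannInt pr = l).

Definition Rint_inf (f : R -> R) (a : R) : R :=
  epsilon (inhabits 0)
    (fun l => forall eps, 0 < eps -> exists M, forall T, M < T ->
       Rabs (Rint f a T - l) < eps).

(* Gauss hypergeometric 2F1(1, b; b+1; -z) with b = 1 - 2/alpha, via Euler's
   integral  b * int_0^1 t^(b-1)/(1+z t) dt, after substituting t = s^(1/b):
   int_0^1 ds / (1 + z s^(alpha/(alpha-2))).  Valid (analytic continuation)
   for all z > -1. *)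
Definition hyp2F1 (alpha z : R) : R :=
  Rint (fun s => / (1 + z * rpow s (alpha / (alpha - 2)))) 0 1.

Definition psi (alpha z : R) : R :=
  2 * z / (alpha - 2) * hyp2F1 alpha z.

Definition Pcov_C (alpha h theta lambda : R) : R :=
  / (psi alpha theta + 1) * exp (- PI * lambda * h ^ 2 * psi alpha theta).

Definition Pcov_S (alpha h theta lambda : R) : R :=
  2 * PI * lambda *
  Rint_inf (fun r => exp (- PI * lambda * h ^ 2 *
                 psi alpha (theta * rpow h (- alpha) * rpow r alpha)) * r) h.

(* Substituting [u = z^(1/p) s], [p = alpha/(alpha-2)], in the Euler integral gives
   [psi z = 2/(alpha-2) z^(2/alpha) Gint p (z^(1/p))] with [Gint p X = int_0^X du / (1 + u^p)].
   Hence the strongest-BS integrand is [exp (- PI lam rate(r) r^2) r], where [rate] is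
   nondecreasing with limit [rate_infty = 2/(alpha-2) theta^(2/alpha) Gint p oo].  Comparing with
   [int_h^oo exp (- c r^2) r dr = exp (- c h^2) / (2 c)] for [c = PI lam rate_infty], and for [c]
   slightly below it beyond a large radius, gives [P_S -> 1 / rate_infty] as [lam -> 0]; for
   [c = PI lam rate(h)] it gives [P_S <= exp (- c h^2) / rate(h) -> 0] as [lam -> oo].
   Finally [Gint p oo = (PI/p) / sin (PI/p)]: expanding [1 / (1 + u^p)] geometrically on
   [0, 1] and on [1, oo) gives [1/p] times the partial-fraction series
   [sum_n (-1)^n (1/(n+s) + 1/(n+1-s)) = PI / sin (PI s)], [s = 1/p], which follows by
   integrating [cos (s x)] against the Dirichlet kernel and a Riemann-Lebesgue estimate.
   The closest-BS limits are immediate from the closed form. *)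

From Stdlib Require Import Reals Lra Lia ClassicalEpsilon.
From Coquelicot Require Import Coquelicot.
Open Scope R_scope.

Lemma rpow_Rpower x y : 0 < x -> rpow x y = Rpower x y.
Proof. intros H; unfold rpow; destruct (Rlt_dec 0 x); [reflexivity | lra]. Qed.

Lemma rpow_le0 x y : x <= 0 -> rpow x y = 0.
Proof. intros H; unfold rpow; destruct (Rlt_dec 0 x); [lra | reflexivity]. Qed.

Lemma rpow_ge0 x y : 0 <= rpow x y.
Proof. unfold rpow; destruct (Rlt_dec 0 x); [left; apply exp_pos | lra]. Qed.

Lemma rpow_le_compat u v q : 0 < q -> 0 <= u <= v -> rpow u q <= rpow v q.
Proof.
  intros Hq [[Hu | <-] Huv].
  - rewrite !rpow_Rpower by lra. apply Rle_Rpower_l; lra.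
  - rewrite rpow_le0 by lra. apply rpow_ge0.
Qed.

Lemma Rmult_rpow_pred x p : x * rpow x (p - 1) = rpow x p.
Proof.
  destruct (Rlt_le_dec 0 x) as [Hx | Hx].
  - rewrite !rpow_Rpower by lra. unfold Rpower.
    replace (p * ln x) with ((p - 1) * ln x + ln x) by ring.
    rewrite exp_plus, exp_ln by lra. ring.
  - rewrite !rpow_le0 by lra. ring.
Qed.

Lemma Rpower_lt_near0 q eps : 0 < q -> 0 < eps -> exists d, 0 < d /\
  forall x, 0 < x < d -> Rpower x q < eps.
Proof.
  intros Hq He. exists (exp (ln eps / q)). split; [apply exp_pos |].
  intros x [Hx0 Hxd]. unfold Rpower. rewrite <- (exp_ln eps He). apply exp_increasing.
  assert (Hln : ln x < ln eps / q).
  { rewrite <- (ln_exp (ln eps / q)). apply ln_increasing; lra. }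
  apply Rmult_lt_compat_l with (r := q) in Hln; [|lra].
  replace (q * (ln eps / q)) with (ln eps) in Hln by (field; lra). lra.
Qed.

Lemma Rpower_lt_near_infty q eps : q < 0 -> 0 < eps ->
  exists X0, 1 <= X0 /\ forall X, X0 <= X -> Rpower X q < eps.
Proof.
  intros Hq He. exists (Rmax 1 (exp (ln eps / q) + 1)). split; [apply Rmax_l |].
  intros X HX. pose proof (Rmax_l 1 (exp (ln eps / q) + 1)).
  pose proof (Rmax_r 1 (exp (ln eps / q) + 1)).
  assert (Hln : ln eps / q < ln X).
  { rewrite <- (ln_exp (ln eps / q)). apply ln_increasing; [apply exp_pos | lra]. }
  apply Rmult_lt_compat_l with (r := - q) in Hln; [| lra].
  replace (- q * (ln eps / q)) with (- ln eps) in Hln by (field; lra).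
  unfold Rpower. rewrite <- (exp_ln eps He). apply exp_increasing. lra.
Qed.

Lemma Rinv_lt_of_INR_gt (x eps : R) (N : nat) : 0 < eps -> / eps < INR N -> INR N <= x ->
  / x < eps.
Proof.
  intros He HN Hx. assert (Hi : 0 < / eps) by (apply Rinv_0_lt_compat; lra).
  rewrite <- (Rinv_inv eps). apply Rinv_lt_contravar; nra.
Qed.

Lemma exp_le_compat x y : x <= y -> exp x <= exp y.
Proof. intros [H | <-]; [left; apply exp_increasing, H | lra]. Qed.

Lemma exp_le_1_plus_2x x : 0 <= x <= 1 / 2 -> exp x <= 1 + 2 * x.
Proof.
  intros Hx. pose proof (exp_ineq1_le (- x)). pose proof (exp_pos x).
  assert (exp x * exp (- x) = 1) by (rewrite <- exp_plus, Rplus_opp_r; apply exp_0).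
  nra.
Qed.

Lemma exp_neg_lt_inv x : 0 < x -> exp (- x) < / x.
Proof.
  intros Hx. pose proof (exp_ineq1_le x). pose proof (exp_pos (- x)).
  assert (exp x * exp (- x) = 1) by (rewrite <- exp_plus, Rplus_opp_r; apply exp_0).
  apply Rmult_lt_reg_l with x; [exact Hx |]. rewrite Rinv_r by lra. nra.
Qed.

Lemma Rinv_minus_Rinv_le Q e : 0 < e <= Q / 2 -> / (Q - e) - / Q <= 2 * e / Q ^ 2.
Proof.
  intros He. replace (/ (Q - e) - / Q) with (e / (Q * (Q - e))) by (field; lra).
  replace (2 * e / Q ^ 2) with (e / (Q * (Q / 2))) by (field; lra).
  unfold Rdiv. apply Rmult_le_compat_l; [lra |]. apply Rinv_le_contravar; nra.
Qed.

Lemma continuous_rpow q x : 0 < q -> continuous (fun u => rpow u q) x.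
Proof.
  intros Hq. destruct (Rtotal_order x 0) as [Hx | [-> | Hx]].
  - apply continuous_ext_loc with (fun _ => 0); [| apply continuous_const].
    apply (filter_imp _ _ (fun u Hu => eq_sym (rpow_le0 u q (Rlt_le _ _ Hu)))).
    exact (open_lt 0 x Hx).
  - apply (proj1 (continuity_pt_filterlim _ _)). intros eps He.
    destruct (Rpower_lt_near0 q eps Hq He) as [d [Hd Hsmall]].
    exists d. split; [exact Hd |]. intros y [_ Hy]. simpl in *. unfold Rdist in *.
    rewrite (rpow_le0 0) by lra. rewrite Rminus_0_r in *.
    destruct (Rlt_le_dec 0 y) as [Hy0 | Hy0].
    + rewrite rpow_Rpower, Rabs_pos_eq by (try left; auto; apply exp_pos).
      apply Hsmall. rewrite Rabs_pos_eq in Hy; lra.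
    + rewrite rpow_le0, Rabs_R0 by lra. lra.
  - apply continuous_ext_loc with (fun u => exp (q * ln u)).
    + apply (filter_imp _ _ (fun u Hu => eq_sym (rpow_Rpower u q Hu))).
      exact (open_gt 0 x Hx).
    + apply (ex_derive_continuous (fun u => exp (q * ln u))). auto_derive. lra.
Qed.

Lemma is_derive_rpow q x : 1 < q -> is_derive (fun u => rpow u q) x (q * rpow x (q - 1)).
Proof.
  intros Hq. destruct (Rtotal_order x 0) as [Hx | [-> | Hx]].
  - rewrite (rpow_le0 x) by lra. rewrite Rmult_0_r.
    apply is_derive_ext_loc with (fun _ => 0); [| auto_derive; auto].
    apply (filter_imp _ _ (fun u Hu => eq_sym (rpow_le0 u q (Rlt_le _ _ Hu)))).
    exact (open_lt 0 x Hx).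
  - rewrite (rpow_le0 0), Rmult_0_r by lra.
    apply is_derive_Reals. intros eps He.
    destruct (Rpower_lt_near0 (q - 1) eps ltac:(lra) He) as [d [Hd Hsmall]].
    exists (mkposreal d Hd). intros y Hy0 Hy. simpl in Hy.
    rewrite Rplus_0_l, (rpow_le0 0), Rminus_0_r, Rminus_0_r by lra.
    rewrite <- (Rmult_rpow_pred y q). unfold Rdiv.
    rewrite (Rmult_comm y), Rmult_assoc, Rinv_r, Rmult_1_r by exact Hy0.
    destruct (Rlt_le_dec 0 y) as [Hy1 | Hy1].
    + rewrite rpow_Rpower, Rabs_pos_eq by (try left; auto; apply exp_pos).
      apply Hsmall. rewrite Rabs_pos_eq in Hy; lra.
    + rewrite rpow_le0, Rabs_R0 by lra. lra.
  - apply is_derive_ext_loc with (fun u => exp (q * ln u)).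
    + apply (filter_imp _ _ (fun u Hu => eq_sym (rpow_Rpower u q Hu))).
      exact (open_gt 0 x Hx).
    + rewrite rpow_Rpower by lra. auto_derive; [lra |].
      unfold Rpower. replace (q * ln x) with ((q - 1) * ln x + ln x) by ring.
      rewrite exp_plus, exp_ln by lra. field. lra.
Qed.

(* Coquelicot's lemmas are stated for a generic normed module and leave goals in [plus], [scal],
   ... on which [ring] and [lra] fail; these are their specialisations to [R]. *)
Lemma continuous_Rmult (f g : R -> R) x :
  continuous f x -> continuous g x -> continuous (fun y => f y * g y) x.
Proof. apply (continuous_mult f g). Qed.

Lemma continuous_Rplus (f g : R -> R) x :
  continuous f x -> continuous g x -> continuous (fun y => f y + g y) x.
Proof. apply (continuous_plus f g). Qed.

Lemma continuous_Rpow (f : R -> R) n x :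
  continuous f x -> continuous (fun y => f y ^ n) x.
Proof.
  intros Hf; induction n; simpl; [apply continuous_const | apply continuous_Rmult; auto].
Qed.

Lemma ex_RInt_cont (f : R -> R) a b :
  (forall x, Rmin a b <= x <= Rmax a b -> continuous f x) -> ex_RInt f a b.
Proof. apply (ex_RInt_continuous (V := R_CompleteNormedModule)). Qed.

Lemma RInt_ext_R (f g : R -> R) a b :
  (forall x, Rmin a b < x < Rmax a b -> f x = g x) -> RInt f a b = RInt g a b.
Proof. apply RInt_ext. Qed.

Lemma is_RInt_ext_R (f g : R -> R) a b l :
  (forall x, Rmin a b < x < Rmax a b -> f x = g x) -> is_RInt f a b l -> is_RInt g a b l.
Proof. apply is_RInt_ext. Qed.

Lemma RInt_minus_R (f g : R -> R) a b : ex_RInt f a b -> ex_RInt g a b ->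
  RInt (fun x => f x - g x) a b = RInt f a b - RInt g a b.
Proof. apply (RInt_minus f g). Qed.

Lemma RInt_plus_R (f g : R -> R) a b : ex_RInt f a b -> ex_RInt g a b ->
  RInt (fun x => f x + g x) a b = RInt f a b + RInt g a b.
Proof. apply (RInt_plus f g). Qed.

Lemma RInt_scal_R (f : R -> R) a b c : ex_RInt f a b ->
  RInt (fun x => c * f x) a b = c * RInt f a b.
Proof. apply (RInt_scal f). Qed.

Lemma RInt_Chasles_R (f : R -> R) a b c : ex_RInt f a b -> ex_RInt f b c ->
  RInt f a b + RInt f b c = RInt f a c.
Proof. apply (RInt_Chasles f). Qed.

Lemma RInt_const_R a b c : RInt (fun _ => c) a b = (b - a) * c.
Proof. apply (RInt_const (V := R_CompleteNormedModule)). Qed.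

Lemma is_RInt_const_R a b c : is_RInt (fun _ => c) a b ((b - a) * c).
Proof. apply (is_RInt_const (V := R_NormedModule)). Qed.

Lemma is_RInt_plus_R (f g : R -> R) a b If Ig : is_RInt f a b If -> is_RInt g a b Ig ->
  is_RInt (fun x => f x + g x) a b (If + Ig).
Proof. apply (is_RInt_plus f g). Qed.

Lemma is_RInt_scal_R (f : R -> R) a b c If : is_RInt f a b If ->
  is_RInt (fun x => c * f x) a b (c * If).
Proof. apply (is_RInt_scal f). Qed.

Lemma is_RInt_derive_R (F f : R -> R) a b :
  (forall x, Rmin a b <= x <= Rmax a b -> is_derive F x (f x)) ->
  (forall x, Rmin a b <= x <= Rmax a b -> continuous f x) ->
  is_RInt f a b (F b - F a).
Proof. apply (is_RInt_derive F f). Qed.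

Lemma Rabs_RInt_le (f g : R -> R) a b : a <= b -> ex_RInt f a b -> ex_RInt g a b ->
  (forall x, a < x < b -> Rabs (f x) <= g x) -> Rabs (RInt f a b) <= RInt g a b.
Proof.
  intros Hab Hf Hg H. apply Rabs_le. split.
  - assert (Hopp : RInt (fun x => - g x) a b <= RInt f a b).
    { apply RInt_le; auto; [apply (ex_RInt_opp g); auto |].
      intros x Hx; specialize (H x Hx); apply Rabs_le_between in H; lra. }
    rewrite (RInt_opp g) in Hopp by auto. unfold opp in Hopp; simpl in Hopp. lra.
  - apply RInt_le; auto. intros x Hx. specialize (H x Hx). apply Rabs_le_between in H. lra.
Qed.

Fixpoint fsum (f : nat -> R) (N : nat) : R :=
  match N with O => 0 | S n => fsum f n + f n end.

Lemma fsum_S f N : fsum f (S N) = fsum f N + f N.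
Proof. reflexivity. Qed.

Lemma fsum_ext f g N : (forall n, (n < N)%nat -> f n = g n) -> fsum f N = fsum g N.
Proof. induction N; simpl; intros H; auto. rewrite IHN, H; auto. Qed.

Lemma fsum_plus f g N : fsum (fun n => f n + g n) N = fsum f N + fsum g N.
Proof. induction N; simpl; [ring | rewrite IHN; ring]. Qed.

Lemma fsum_minus f g N : fsum (fun n => f n - g n) N = fsum f N - fsum g N.
Proof. induction N; simpl; [ring | rewrite IHN; ring]. Qed.

Lemma fsum_scal c f N : fsum (fun n => c * f n) N = c * fsum f N.
Proof. induction N; simpl; [ring | rewrite IHN; ring]. Qed.

Lemma Rabs_fsum_le f b N :
  (forall n, (n < N)%nat -> Rabs (f n) <= b) -> Rabs (fsum f N) <= INR N * b.
Proof.
  induction N; intros H; simpl fsum; [rewrite Rabs_R0; simpl; lra |].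
  rewrite S_INR. eapply Rle_trans; [apply Rabs_triang |].
  assert (Rabs (fsum f N) <= INR N * b) by (apply IHN; intros; apply H; lia).
  assert (Rabs (f N) <= b) by (apply H; lia). lra.
Qed.

Lemma is_RInt_fsum (F : nat -> R -> R) (I : nat -> R) a b N :
  (forall n, is_RInt (F n) a b (I n)) ->
  is_RInt (fun x => fsum (fun n => F n x) N) a b (fsum I N).
Proof.
  intros H. induction N; simpl.
  - apply (is_RInt_ext (fun _ => 0)); [auto |].
    pose proof (is_RInt_const_R a b 0) as K. rewrite Rmult_0_r in K. exact K.
  - apply is_RInt_plus_R; auto.
Qed.

Lemma Rinv_1p_geom (y : R) (N : nat) : 1 + y <> 0 ->
  / (1 + y) = fsum (fun k => (-1) ^ k * y ^ k) N + (-1) ^ N * y ^ N / (1 + y).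
Proof. intros H. induction N; simpl; [field; auto | rewrite IHN at 1; field; auto]. Qed.

(** * The integral [Gint p X] of [1 / (1 + u^p)] over [0, X] *)

Definition inv1p (p u : R) : R := / (1 + rpow u p).

Definition Gint (p X : R) : R := RInt (inv1p p) 0 X.

Section Gint.
Variable p : R.
Hypothesis Hp : 1 < p.

Lemma inv1p_gt0 u : 0 < inv1p p u.
Proof. unfold inv1p. apply Rinv_0_lt_compat. pose proof (rpow_ge0 u p); lra. Qed.

Lemma inv1p_le1 u : inv1p p u <= 1.
Proof.
  unfold inv1p. pose proof (rpow_ge0 u p). rewrite <- Rinv_1.
  apply Rinv_le_contravar; lra.
Qed.

Lemma continuous_inv1p u : continuous (inv1p p) u.
Proof.
  pose proof (rpow_ge0 u p). apply continuous_Rinv_comp; [| lra].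
  apply continuous_Rplus; [apply continuous_const | apply continuous_rpow; lra].
Qed.

Lemma ex_RInt_inv1p a b : ex_RInt (inv1p p) a b.
Proof. apply ex_RInt_cont; intros; apply continuous_inv1p. Qed.

Lemma Gint_Chasles X Y : Gint p X + RInt (inv1p p) X Y = Gint p Y.
Proof. apply RInt_Chasles_R; apply ex_RInt_inv1p. Qed.

Lemma Gint_le_compat X Y : X <= Y -> Gint p X <= Gint p Y.
Proof.
  intros H. rewrite <- (Gint_Chasles X Y).
  assert (0 <= RInt (inv1p p) X Y); [| lra].
  apply RInt_ge_0; auto; [apply ex_RInt_inv1p |]. intros; left; apply inv1p_gt0.
Qed.

Lemma continuous_Gint X : continuous (Gint p) X.
Proof.
  apply (ex_derive_continuous (Gint p)). exists (inv1p p X).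
  apply (is_derive_RInt (inv1p p) (Gint p) 0 X).
  - apply filter_forall. intros b.
    apply (RInt_correct (V := R_CompleteNormedModule)), ex_RInt_inv1p.
  - apply continuous_inv1p.
Qed.

Lemma Gint_gt0 X : 0 < X -> 0 < Gint p X.
Proof.
  intros HX. apply Rlt_le_trans with (RInt (fun _ => inv1p p X) 0 X).
  - rewrite RInt_const_R, Rminus_0_r. apply Rmult_lt_0_compat; auto. apply inv1p_gt0.
  - apply RInt_le; [lra | apply ex_RInt_const | apply ex_RInt_inv1p |].
    intros x Hx. unfold inv1p. apply Rinv_le_contravar; [pose proof (rpow_ge0 x p); lra |].
    apply Rplus_le_compat_l, rpow_le_compat; lra.
Qed.

Lemma is_RInt_rpow_pow n : is_RInt (fun u => rpow u p ^ n) 0 1 (/ (INR n * p + 1)).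
Proof.
  assert (Hn : 0 < INR n * p + 1) by (pose proof (pos_INR n); nra).
  set (F := fun u => u * rpow u p ^ n / (INR n * p + 1)).
  replace (/ (INR n * p + 1)) with (F 1 - F 0).
  2:{ unfold F. rewrite (rpow_Rpower 1 p) by lra. unfold Rpower.
      rewrite ln_1, Rmult_0_r, exp_0, pow1. field. lra. }
  apply is_RInt_derive_R.
  - intros x _.
    assert (D : is_derive (fun u => u * rpow u p ^ n) x
                  (1 * rpow x p ^ n + x * (INR n * (p * rpow x (p - 1)) * rpow x p ^ pred n))).
    { apply (is_derive_mult (fun u => u) (fun u => rpow u p ^ n)).
      - apply (is_derive_id x).
      - apply (is_derive_pow (fun u => rpow u p)). apply is_derive_rpow; auto.
      - intros; apply Rmult_comm. }
    replace (1 * rpow x p ^ n + x * (INR n * (p * rpow x (p - 1)) * rpow x p ^ pred n))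
      with (rpow x p ^ n * (INR n * p + 1)) in D.
    2:{ destruct n; simpl; [ring |].
        rewrite <- (Rmult_rpow_pred x p). ring. }
    apply (is_derive_ext (fun u => / (INR n * p + 1) * (u * rpow u p ^ n))).
    { intros t. apply Rmult_comm. }
    replace (rpow x p ^ n) with (/ (INR n * p + 1) * (rpow x p ^ n * (INR n * p + 1)))
      by (field; lra).
    apply (is_derive_scal (fun u => u * rpow u p ^ n)). exact D.
  - intros x _. apply continuous_Rpow, continuous_rpow; lra.
Qed.

End Gint.

Lemma continuous_Rpower_base c u : 0 < u -> continuous (fun x => Rpower x c) u.
Proof. intros Hu. apply (ex_derive_continuous (fun x => exp (c * ln x))). auto_derive. lra. Qed.

Lemma is_RInt_Rpower c X : 1 <= X -> c <> -1 ->
  is_RInt (fun u => Rpower u c) 1 X ((Rpower X (c + 1) - 1) / (c + 1)).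
Proof.
  intros HX Hc.
  replace ((Rpower X (c + 1) - 1) / (c + 1)) with
    (Rpower X (c + 1) / (c + 1) - Rpower 1 (c + 1) / (c + 1)).
  2:{ unfold Rpower. rewrite ln_1, Rmult_0_r, exp_0. field. lra. }
  apply (is_RInt_derive_R (fun u => Rpower u (c + 1) / (c + 1))).
  - intros x Hx. rewrite Rmin_left, Rmax_right in Hx by lra. unfold Rpower.
    auto_derive; [lra |]. replace ((c + 1) * ln x) with (c * ln x + ln x) by ring.
    rewrite exp_plus, exp_ln by lra. field. split; lra.
  - intros x Hx. rewrite Rmin_left, Rmax_right in Hx by lra. apply continuous_Rpower_base; lra.
Qed.

Lemma RInt_Rpower_le c X : 1 <= X -> c < -1 ->
  RInt (fun u => Rpower u c) 1 X <= / (- c - 1).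
Proof.
  intros HX Hc. rewrite (is_RInt_unique _ _ _ _ (is_RInt_Rpower c X HX ltac:(lra))).
  replace ((Rpower X (c + 1) - 1) / (c + 1)) with (/ (- c - 1) - Rpower X (c + 1) / (- c - 1))
    by (field; lra).
  assert (0 < Rpower X (c + 1) / (- c - 1)) by (apply Rdiv_lt_0_compat; [apply exp_pos | lra]).
  lra.
Qed.

Section Gint_series.
Variable p : R.
Hypothesis Hp : 1 < p.

Lemma Gint1_series_err N :
  Rabs (Gint p 1 - fsum (fun n => (-1) ^ n * / (INR n * p + 1)) N) <= / (INR N * p + 1).
Proof.
  assert (HI : is_RInt (fun u => fsum (fun n => (-1) ^ n * rpow u p ^ n) N) 0 1
                 (fsum (fun n => (-1) ^ n * / (INR n * p + 1)) N)).
  { apply (is_RInt_fsum (fun n u => (-1) ^ n * rpow u p ^ n)). intros n.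
    apply is_RInt_scal_R, is_RInt_rpow_pow; auto. }
  rewrite <- (is_RInt_unique _ _ _ _ HI). unfold Gint.
  rewrite <- RInt_minus_R; [| apply ex_RInt_inv1p; lra | eexists; exact HI].
  rewrite (RInt_ext_R _ (fun u => (-1) ^ N * rpow u p ^ N * inv1p p u)).
  2:{ intros x _. pose proof (rpow_ge0 x p). unfold inv1p.
      rewrite (Rinv_1p_geom (rpow x p) N) at 1 by lra. unfold Rdiv. ring. }
  rewrite <- (is_RInt_unique _ _ _ _ (is_RInt_rpow_pow p Hp N)).
  apply Rabs_RInt_le; [lra | | eexists; apply is_RInt_rpow_pow; auto |].
  - apply ex_RInt_cont. intros x _. apply continuous_Rmult; [| apply continuous_inv1p; lra].
    apply continuous_Rmult; [apply continuous_const |].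
    apply continuous_Rpow, continuous_rpow; lra.
  - intros x _. rewrite !Rabs_mult, pow_1_abs, Rmult_1_l.
    rewrite (Rabs_pos_eq (rpow x p ^ N)) by (apply pow_le, rpow_ge0).
    rewrite Rabs_pos_eq by (left; apply inv1p_gt0).
    pose proof (inv1p_le1 p x). pose proof (pow_le _ N (rpow_ge0 x p)). nra.
Qed.

Lemma inv1p_expand u N : 0 < u ->
  inv1p p u = fsum (fun k => (-1) ^ k * Rpower u (- (INR k + 1) * p)) N
              + (-1) ^ N * Rpower u (- INR N * p) * inv1p p u.
Proof.
  intros Hu. set (v := Rpower u (- p)).
  assert (Hv : 0 < v) by apply exp_pos.
  assert (Hpow : forall k, Rpower u (- INR k * p) = v ^ k).
  { intros k. unfold v. rewrite <- Rpower_pow, Rpower_mult by apply exp_pos. f_equal; ring. }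
  assert (Hinv : inv1p p u = v / (1 + v)).
  { unfold inv1p, v. rewrite rpow_Rpower, Rpower_Ropp by lra.
    pose proof (exp_pos (p * ln u)). unfold Rpower. field. split; lra. }
  rewrite (fsum_ext _ (fun k => v * ((-1) ^ k * v ^ k))).
  2:{ intros k _. rewrite <- S_INR, Hpow. simpl. ring. }
  rewrite Hpow, Hinv, fsum_scal. unfold Rdiv at 1.
  rewrite (Rinv_1p_geom v N) by lra. field. lra.
Qed.

Lemma inv1p_le_Rpower x : 0 < x -> inv1p p x <= Rpower x (- p).
Proof.
  intros Hx. unfold inv1p. rewrite rpow_Rpower, Rpower_Ropp by exact Hx.
  pose proof (exp_pos (p * ln x)). apply Rinv_le_contravar; unfold Rpower; lra.
Qed.

Lemma RInt_inv1p_tail_err X N : 1 <= X ->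
  Rabs (RInt (inv1p p) 1 X -
        fsum (fun k => (-1) ^ k * ((1 - Rpower X (1 - (INR k + 1) * p)) / ((INR k + 1) * p - 1))) N)
  <= / ((INR N + 1) * p - 1).
Proof.
  intros HX.
  assert (Hk : forall k, 0 < (INR k + 1) * p - 1) by (intros k; pose proof (pos_INR k); nra).
  assert (HI : is_RInt (fun u => fsum (fun k => (-1) ^ k * Rpower u (- (INR k + 1) * p)) N) 1 X
     (fsum (fun k => (-1) ^ k * ((1 - Rpower X (1 - (INR k + 1) * p)) / ((INR k + 1) * p - 1))) N)).
  { apply (is_RInt_fsum (fun k u => (-1) ^ k * Rpower u (- (INR k + 1) * p))). intros k.
    apply is_RInt_scal_R. specialize (Hk k).
    replace ((1 - Rpower X (1 - (INR k + 1) * p)) / ((INR k + 1) * p - 1)) with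
      ((Rpower X (- (INR k + 1) * p + 1) - 1) / (- (INR k + 1) * p + 1))
      by (replace (- (INR k + 1) * p + 1) with (1 - (INR k + 1) * p) by ring; field; lra).
    apply is_RInt_Rpower; lra. }
  rewrite <- (is_RInt_unique _ _ _ _ HI).
  rewrite <- RInt_minus_R; [| apply ex_RInt_inv1p; lra | eexists; exact HI].
  rewrite (RInt_ext_R _ (fun u => (-1) ^ N * Rpower u (- INR N * p) * inv1p p u)).
  2:{ intros x Hx. rewrite Rmin_left, Rmax_right in Hx by lra.
      rewrite (inv1p_expand x N) at 1 by lra. ring. }
  assert (HN := Hk N).
  eapply Rle_trans; [apply Rabs_RInt_le with (g := fun u => Rpower u (- (INR N + 1) * p)) |].
  - lra.
  - apply ex_RInt_cont. intros x Hx. rewrite Rmin_left, Rmax_right in Hx by lra.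
    apply continuous_Rmult; [apply continuous_Rmult |].
    + apply continuous_const.
    + apply continuous_Rpower_base; lra.
    + apply continuous_inv1p; lra.
  - eexists. apply is_RInt_Rpower; nra.
  - intros x Hx. rewrite !Rabs_mult, pow_1_abs, Rmult_1_l.
    rewrite !Rabs_pos_eq by (left; try apply exp_pos; apply inv1p_gt0).
    replace (- (INR N + 1) * p) with (- INR N * p + - p) by ring.
    rewrite Rpower_plus.
    apply Rmult_le_compat_l; [left; apply exp_pos | apply inv1p_le_Rpower; lra].
  - replace ((INR N + 1) * p - 1) with (- (- (INR N + 1) * p) - 1) by ring.
    apply RInt_Rpower_le; nra.
Qed.

(* The terms are [int_0^1 u^(n p) du] and [int_1^oo u^(-(n+1) p) du]. *)
Definition Gseries N :=
  fsum (fun n => (-1) ^ n * (/ (INR n * p + 1) + / ((INR n + 1) * p - 1))) N.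

Lemma Gint_Gseries_err X N : 1 <= X ->
  Rabs (Gint p X - Gseries N) <=
    / (INR N * p + 1) + / ((INR N + 1) * p - 1) + INR N * (Rpower X (1 - p) / (p - 1)).
Proof.
  intros HX.
  set (a := fun n => (-1) ^ n * / (INR n * p + 1)).
  set (b := fun n : nat => (-1) ^ n * / ((INR n + 1) * p - 1)).
  set (d := fun k : nat => (-1) ^ k * (Rpower X (1 - (INR k + 1) * p) / ((INR k + 1) * p - 1))).
  assert (Hk : forall k, 0 < (INR k + 1) * p - 1) by (intros k; pose proof (pos_INR k); nra).
  assert (HT : Gseries N = fsum a N + fsum b N).
  { unfold Gseries. rewrite <- fsum_plus. apply fsum_ext; intros; unfold a, b; ring. }
  pose proof (Gint1_series_err N) as HA.
  pose proof (RInt_inv1p_tail_err X N HX) as HB.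
  rewrite (fsum_ext _ (fun k => b k - d k)), fsum_minus in HB.
  2:{ intros k _. unfold b, d. specialize (Hk k). field. lra. }
  assert (Hd : Rabs (fsum d N) <= INR N * (Rpower X (1 - p) / (p - 1))).
  { apply Rabs_fsum_le. intros k _. unfold d. specialize (Hk k). pose proof (pos_INR k).
    rewrite Rabs_mult, pow_1_abs, Rmult_1_l, Rabs_pos_eq.
    2:{ apply Rmult_le_pos; [left; apply exp_pos | left; apply Rinv_0_lt_compat; lra]. }
    apply Rmult_le_compat; [left; apply exp_pos | left; apply Rinv_0_lt_compat; lra | |].
    - apply Rle_Rpower; nra.
    - apply Rinv_le_contravar; nra. }
  rewrite HT, <- (Gint_Chasles p Hp 1 X).
  replace (Gint p 1 + RInt (inv1p p) 1 X - (fsum a N + fsum b N)) with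
    ((Gint p 1 - fsum a N) + (RInt (inv1p p) 1 X - (fsum b N - fsum d N)) - fsum d N) by ring.
  eapply Rle_trans; [apply Rabs_triang |]. rewrite Rabs_Ropp.
  eapply Rle_trans; [apply Rplus_le_compat_r, Rabs_triang |]. fold a in HA. lra.
Qed.

End Gint_series.

Section Gint_limit.
Variable p : R.
Hypothesis Hp : 1 < p.

Lemma Gint_tendsto L :
  (forall eps, 0 < eps -> exists N0, forall N, (N0 <= N)%nat -> Rabs (Gseries p N - L) < eps) ->
  forall eps, 0 < eps -> exists X0, 1 <= X0 /\ forall X, X0 <= X -> Rabs (Gint p X - L) < eps.
Proof.
  intros HL eps He.
  destruct (HL (eps / 4)) as [N0 HN0]; [lra |].
  destruct (INR_unbounded (/ (eps / 4))) as [N1 HN1].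
  set (N := Nat.max N0 N1).
  assert (HN : / (eps / 4) < INR N) by (pose proof (le_INR N1 N ltac:(lia)); lra).
  assert (Hpos : 0 < / (eps / 4)) by (apply Rinv_0_lt_compat; lra).
  assert (Ha : / (INR N * p + 1) < eps / 4)
    by (apply (Rinv_lt_of_INR_gt _ _ N); nra).
  assert (Hb : / ((INR N + 1) * p - 1) < eps / 4)
    by (apply (Rinv_lt_of_INR_gt _ _ N); nra).
  set (del := eps * (p - 1) / (4 * (INR N + 1))).
  assert (Hdel : 0 < del) by (unfold del; pose proof (pos_INR N); apply Rdiv_lt_0_compat; nra).
  destruct (Rpower_lt_near_infty (1 - p) del ltac:(lra) Hdel) as [X0 [HX0 Hsmall]].
  exists X0. split; [exact HX0 |]. intros X HX.
  assert (Hc : INR N * (Rpower X (1 - p) / (p - 1)) < eps / 4).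
  { specialize (Hsmall X HX). pose proof (pos_INR N).
    apply Rle_lt_trans with (INR N * (del / (p - 1))).
    - apply Rmult_le_compat_l; [lra |].
      apply Rmult_le_compat_r; [left; apply Rinv_0_lt_compat |]; lra.
    - replace (INR N * (del / (p - 1))) with (eps / 4 * (INR N / (INR N + 1)))
        by (unfold del; field; split; lra).
      assert (Hq : INR N / (INR N + 1) < 1).
      { apply Rmult_lt_reg_r with (INR N + 1); [lra |].
        unfold Rdiv. rewrite Rmult_assoc, Rinv_l; lra. }
      rewrite <- (Rmult_1_r (eps / 4)) at 2. apply Rmult_lt_compat_l; lra. }
  pose proof (Gint_Gseries_err p Hp X N ltac:(lra)).
  assert (Rabs (Gseries p N - L) < eps / 4) by (apply HN0; unfold N; lia).
  replace (Gint p X - L) with ((Gint p X - Gseries p N) + (Gseries p N - L)) by ring.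
  eapply Rle_lt_trans; [apply Rabs_triang | lra].
Qed.

Lemma Gint_le_of_tendsto L :
  (forall eps, 0 < eps -> exists X0, 1 <= X0 /\ forall X, X0 <= X -> Rabs (Gint p X - L) < eps) ->
  forall X, Gint p X <= L.
Proof.
  intros H X. destruct (Rle_lt_dec (Gint p X) L) as [Hle | Hlt]; [exact Hle |].
  destruct (H (Gint p X - L)) as [X0 [_ HX0]]; [lra |].
  specialize (HX0 (Rmax X0 X) (Rmax_l _ _)).
  pose proof (Gint_le_compat p Hp X (Rmax X0 X) (Rmax_r _ _)).
  apply Rabs_lt_between in HX0. lra.
Qed.

End Gint_limit.

(** * The partial-fraction expansion of [PI / sin (PI s)] *)

Lemma sin_plus_INR_PI y n : sin (y + INR n * PI) = (-1) ^ n * sin y.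
Proof.
  induction n; simpl pow; [rewrite Rmult_0_l, Rplus_0_r; ring |].
  rewrite S_INR. replace (y + (INR n + 1) * PI) with ((y + INR n * PI) + PI) by ring.
  rewrite neg_sin, IHn. ring.
Qed.

Lemma sin_minus_INR_PI y n : sin (y - INR n * PI) = (-1) ^ n * sin y.
Proof.
  pose proof (sin_plus_INR_PI (y - INR n * PI) n) as H.
  replace (y - INR n * PI + INR n * PI) with y in H by ring.
  rewrite H, <- Rmult_assoc, <- Rpow_mult_distr.
  replace (-1 * -1) with 1 by ring. rewrite pow1. ring.
Qed.

Definition dirichlet (N : nat) (x : R) : R := -1 + 2 * fsum (fun n => cos (INR n * x)) (S N).

Lemma continuous_dirichlet N x : continuous (dirichlet N) x.
Proof.
  unfold dirichlet. apply continuous_Rplus; [apply continuous_const |].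
  apply continuous_Rmult; [apply continuous_const |].
  generalize (S N). induction n; simpl; [apply continuous_const |].
  apply continuous_Rplus; auto.
  apply (ex_derive_continuous (fun x => cos (INR n * x))). auto_derive. auto.
Qed.

Lemma dirichlet_mul_sin N x : dirichlet N x * sin (x / 2) = sin ((INR N + / 2) * x).
Proof.
  induction N; unfold dirichlet in *.
  - simpl. rewrite Rmult_0_l, cos_0. replace ((0 + / 2) * x) with (x / 2) by field. ring.
  - rewrite (fsum_S _ (S N)).
    replace ((-1 + 2 * (fsum (fun n => cos (INR n * x)) (S N) + cos (INR (S N) * x))) * sin (x / 2))
      with ((-1 + 2 * fsum (fun n => cos (INR n * x)) (S N)) * sin (x / 2)
            + 2 * cos (INR (S N) * x) * sin (x / 2)) by ring.
    rewrite IHN, S_INR.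
    replace ((INR N + 1 + / 2) * x) with ((INR N + 1) * x + x / 2) by field.
    replace ((INR N + / 2) * x) with ((INR N + 1) * x - x / 2) by field.
    rewrite sin_plus, sin_minus. ring.
Qed.

Lemma is_RInt_cos_nat n :
  is_RInt (fun x => cos (INR n * x)) 0 PI (match n with O => PI | S _ => 0 end).
Proof.
  destruct n.
  - apply (is_RInt_ext (fun _ => 1)); [intros; simpl; rewrite Rmult_0_l, cos_0; auto |].
    pose proof (is_RInt_const_R 0 PI 1) as K. rewrite Rminus_0_r, Rmult_1_r in K. exact K.
  - assert (Hn : 0 < INR (S n)) by (apply lt_0_INR; lia).
    assert (Hsin : sin (INR (S n) * PI) = 0).
    { rewrite <- (Rplus_0_l (INR (S n) * PI)), sin_plus_INR_PI, sin_0. ring. }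
    set (m := INR (S n)) in *. clearbody m.
    assert (K : is_RInt (fun x => cos (m * x)) 0 PI (sin (m * PI) / m - sin (m * 0) / m)).
    { apply (is_RInt_derive_R (fun x => sin (m * x) / m)).
      - intros x _. auto_derive; [lra |]. field. lra.
      - intros x _. apply (ex_derive_continuous (fun x => cos (m * x))). auto_derive. auto. }
    rewrite Rmult_0_r, sin_0, Hsin in K. replace (0 / m - 0 / m) with 0 in K by (field; lra).
    exact K.
Qed.

Lemma is_RInt_dirichlet N : is_RInt (dirichlet N) 0 PI PI.
Proof.
  assert (K : is_RInt (dirichlet N) 0 PI
    (-1 * PI + 2 * fsum (fun n => match n with O => PI | S _ => 0 end) (S N))).
  { apply is_RInt_plus_R.
    - pose proof (is_RInt_const_R 0 PI (-1)) as K. rewrite Rminus_0_r, Rmult_comm in K. exact K.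
    - apply is_RInt_scal_R, (is_RInt_fsum (fun n x => cos (INR n * x))).
      intros; apply is_RInt_cos_nat. }
  replace (-1 * PI + 2 * fsum (fun n => match n with O => PI | S _ => 0 end) (S N)) with PI in K;
    [exact K | clear K; induction N; [simpl; ring | rewrite fsum_S; lra]].
Qed.

Section Partial_fractions.
Variable s : R.
Hypothesis Hs : 0 < s < 1.

Lemma is_RInt_cos_mul_cos n :
  is_RInt (fun x => cos (s * x) * cos (INR n * x)) 0 PI
    ((-1) ^ n * sin (PI * s) * s / (s ^ 2 - INR n ^ 2)).
Proof.
  assert (H1 : s - INR n <> 0).
  { destruct n; [simpl; lra |]. rewrite S_INR. pose proof (pos_INR n). lra. }
  assert (H2 : s + INR n <> 0) by (pose proof (pos_INR n); lra).
  set (F := fun x =>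
    (sin ((s - INR n) * x) / (s - INR n) + sin ((s + INR n) * x) / (s + INR n)) / 2).
  replace ((-1) ^ n * sin (PI * s) * s / (s ^ 2 - INR n ^ 2)) with (F PI - F 0).
  2:{ unfold F. rewrite !Rmult_0_r, sin_0.
      replace ((s - INR n) * PI) with (PI * s - INR n * PI) by ring.
      replace ((s + INR n) * PI) with (PI * s + INR n * PI) by ring.
      rewrite sin_plus_INR_PI, sin_minus_INR_PI.
      replace (s ^ 2 - INR n ^ 2) with ((s - INR n) * (s + INR n)) by ring.
      field. auto. }
  apply is_RInt_derive_R.
  - intros x _. unfold F. auto_derive; [auto |].
    replace ((s - INR n) * x) with (s * x - INR n * x) by ring.
    replace ((s + INR n) * x) with (s * x + INR n * x) by ring.
    rewrite cos_minus, cos_plus. field. auto.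
  - intros x _. apply (ex_derive_continuous (fun x => cos (s * x) * cos (INR n * x))).
    auto_derive. auto.
Qed.

Definition csc_pfrac N := fsum (fun n => (-1) ^ n * (/ (INR n + s) + / (INR n + 1 - s))) N.

Definition cos_pfrac N := - / s + 2 * fsum (fun n => (-1) ^ n * s / (s ^ 2 - INR n ^ 2)) (S N).

Lemma csc_pfrac_S N : csc_pfrac (S N) = cos_pfrac N + (-1) ^ N / (INR N + 1 - s).
Proof.
  induction N; unfold csc_pfrac, cos_pfrac in *; [simpl; field; lra |].
  rewrite !(fsum_S _ (S N)), IHN, S_INR. pose proof (pos_INR N).
  assert (s ^ 2 - (INR N + 1) ^ 2 <> 0).
  { replace (s ^ 2 - (INR N + 1) ^ 2) with ((s - (INR N + 1)) * (s + (INR N + 1))) by ring.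
    apply Rmult_integral_contrapositive; split; lra. }
  simpl pow. simpl pow in H0. field. repeat split; lra.
Qed.

Lemma RInt_cos_mul_dirichlet N :
  RInt (fun x => cos (s * x) * dirichlet N x) 0 PI = sin (PI * s) * cos_pfrac N.
Proof.
  apply is_RInt_unique.
  apply (is_RInt_ext_R (fun x => -1 * (cos (s * x) * cos (INR 0 * x))
                               + 2 * fsum (fun n => cos (s * x) * cos (INR n * x)) (S N))).
  { intros x _. unfold dirichlet. rewrite fsum_scal. simpl INR. rewrite Rmult_0_l, cos_0. ring. }
  replace (sin (PI * s) * cos_pfrac N) with
    (-1 * ((-1) ^ 0 * sin (PI * s) * s / (s ^ 2 - INR 0 ^ 2))
     + 2 * fsum (fun n => (-1) ^ n * sin (PI * s) * s / (s ^ 2 - INR n ^ 2)) (S N)).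
  2:{ unfold cos_pfrac.
      rewrite (fsum_ext _ (fun n => sin (PI * s) * ((-1) ^ n * s / (s ^ 2 - INR n ^ 2))))
        by (intros; unfold Rdiv; ring).
      rewrite fsum_scal. cbn [pow INR]. field. lra. }
  apply is_RInt_plus_R; apply is_RInt_scal_R; [apply is_RInt_cos_mul_cos |].
  apply (is_RInt_fsum (fun n x => cos (s * x) * cos (INR n * x))).
  intros; apply is_RInt_cos_mul_cos.
Qed.

End Partial_fractions.

Section Mul_sin.
Variables (g g' : R -> R) (a b M : R).
Hypothesis Hab : a <= b.
Hypothesis HM : 0 < M.
Hypothesis Hg : forall x, a <= x <= b -> is_derive g x (g' x).
Hypothesis Hg'c : forall x, a <= x <= b -> continuous g' x.

Lemma continuous_mul_cos x : a <= x <= b -> continuous (fun x => g' x * cos (M * x) / M) x.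
Proof.
  intros Hx. apply continuous_Rmult; [| apply continuous_const].
  apply continuous_Rmult; [apply Hg'c, Hx |].
  apply (ex_derive_continuous (fun x => cos (M * x))). auto_derive. auto.
Qed.

Lemma RInt_mul_sin_by_parts :
  RInt (fun x => g x * sin (M * x)) a b =
  (g a * cos (M * a) - g b * cos (M * b)) / M + RInt (fun x => g' x * cos (M * x) / M) a b.
Proof.
  set (F := fun x => - g x * cos (M * x) / M).
  set (F' := fun x => - g' x * cos (M * x) / M + g x * sin (M * x)).
  assert (HF : forall x, a <= x <= b -> is_derive F x (F' x)).
  { intros x Hx. unfold F, F'.
    apply (is_derive_ext (fun x => / M * (- g x * cos (M * x)))); [intros; apply Rmult_comm |].
    replace (- g' x * cos (M * x) / M + g x * sin (M * x)) with
      (/ M * (- g' x * cos (M * x) + - g x * (- (M * sin (M * x))))) by (field; lra).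
    apply is_derive_scal, (is_derive_mult (fun x => - g x) (fun x => cos (M * x)));
      [apply (is_derive_opp g), Hg, Hx | auto_derive; [auto | ring] | intros; apply Rmult_comm]. }
  assert (HI : is_RInt F' a b (F b - F a)).
  { apply (is_RInt_derive_R F F'); intros x Hx; rewrite Rmin_left, Rmax_right in Hx by lra;
      [apply HF, Hx |].
    unfold F'. apply continuous_Rplus; apply continuous_Rmult.
    - apply continuous_Rmult; [apply (continuous_opp g'), Hg'c, Hx |].
      apply (ex_derive_continuous (fun x => cos (M * x))). auto_derive. auto.
    - apply continuous_const.
    - apply (ex_derive_continuous g). eexists. apply Hg, Hx.
    - apply (ex_derive_continuous (fun x => sin (M * x))). auto_derive. auto. }
  assert (Hex : ex_RInt (fun x => g' x * cos (M * x) / M) a b).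
  { apply ex_RInt_cont. intros x Hx. rewrite Rmin_left, Rmax_right in Hx by lra.
    apply continuous_mul_cos, Hx. }
  rewrite (RInt_ext_R _ (fun x => F' x + g' x * cos (M * x) / M))
    by (intros; unfold F'; field; lra).
  rewrite RInt_plus_R, (is_RInt_unique _ _ _ _ HI) by (auto; eexists; exact HI).
  unfold F. f_equal. field. lra.
Qed.

Lemma Rabs_RInt_mul_sin_le A B :
  (forall x, a <= x <= b -> Rabs (g x) <= A) ->
  (forall x, a <= x <= b -> Rabs (g' x) <= B) ->
  Rabs (RInt (fun x => g x * sin (M * x)) a b) <= (2 * A + (b - a) * B) / M.
Proof.
  intros HA HB. rewrite RInt_mul_sin_by_parts.
  assert (B1 : Rabs ((g a * cos (M * a) - g b * cos (M * b)) / M) <= 2 * A / M).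
  { unfold Rdiv. rewrite Rabs_mult, (Rabs_pos_eq (/ M)) by (left; apply Rinv_0_lt_compat; lra).
    apply Rmult_le_compat_r; [left; apply Rinv_0_lt_compat; lra |].
    eapply Rle_trans; [apply Rabs_triang |]. rewrite Rabs_Ropp, !Rabs_mult.
    pose proof (HA a ltac:(lra)). pose proof (HA b ltac:(lra)).
    assert (Rabs (cos (M * a)) <= 1) by (apply Rabs_le, COS_bound).
    assert (Rabs (cos (M * b)) <= 1) by (apply Rabs_le, COS_bound).
    pose proof (Rabs_pos (g a)). pose proof (Rabs_pos (g b)).
    pose proof (Rabs_pos (cos (M * a))). pose proof (Rabs_pos (cos (M * b))). nra. }
  assert (B2 : Rabs (RInt (fun x => g' x * cos (M * x) / M) a b) <= (b - a) * (B / M)).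
  { apply abs_RInt_le_const; [exact Hab | | intros x Hx].
    - apply ex_RInt_cont. intros x Hx. rewrite Rmin_left, Rmax_right in Hx by lra.
      apply continuous_mul_cos, Hx.
    - unfold Rdiv. rewrite !Rabs_mult, (Rabs_pos_eq (/ M)) by (left; apply Rinv_0_lt_compat; lra).
      apply Rmult_le_compat_r; [left; apply Rinv_0_lt_compat; lra |].
      assert (Rabs (cos (M * x)) <= 1) by (apply Rabs_le, COS_bound).
      pose proof (HB x Hx). pose proof (Rabs_pos (g' x)). pose proof (Rabs_pos (cos (M * x))).
      nra. }
  eapply Rle_trans; [apply Rabs_triang |].
  replace ((2 * A + (b - a) * B) / M) with (2 * A / M + (b - a) * (B / M)) by (field; lra).
  lra.
Qed.

End Mul_sin.

Lemma sin_half_gt0 x : 0 < x <= PI -> 0 < sin (x / 2).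
Proof. intros. apply sin_gt_0; pose proof PI_RGT_0; lra. Qed.

Lemma sin_half_le_compat x y : 0 <= x <= y -> y <= PI -> sin (x / 2) <= sin (y / 2).
Proof.
  intros [H1 [H2 | <-]] H3; [| lra].
  left. apply sin_increasing_1; pose proof PI_RGT_0; lra.
Qed.

Section Riemann_Lebesgue.
Variable s : R.
Hypothesis Hs : 0 < s < 1.

Definition cosm1_div_sin x := (cos (s * x) - 1) / sin (x / 2).

Definition cosm1_div_sin' x :=
  (- s * sin (s * x) * sin (x / 2) - (cos (s * x) - 1) * (cos (x / 2) / 2)) / sin (x / 2) ^ 2.

Lemma is_derive_cosm1_div_sin x : sin (x / 2) <> 0 ->
  is_derive cosm1_div_sin x (cosm1_div_sin' x).
Proof.
  intros H. unfold cosm1_div_sin, cosm1_div_sin'. auto_derive; [exact H |].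
  unfold Rdiv in *. field. exact H.
Qed.

(* [1 - cos (s x) = 2 sin (s x / 2)^2 <= 2 sin (x / 2)^2] cancels the zero of the denominator. *)
Lemma Rabs_cosm1_mul_div_sin_le x c : 0 < x <= PI -> Rabs c <= 1 ->
  Rabs ((cos (s * x) - 1) * c / sin (x / 2)) <= 2.
Proof.
  intros Hx Hc.
  assert (Hb : 0 < sin (x / 2)) by (apply sin_half_gt0; auto).
  set (a := sin (s * x / 2)).
  assert (Ha0 : 0 <= a) by (unfold a; apply sin_ge_0; pose proof PI_RGT_0; nra).
  assert (Hab : a <= sin (x / 2)) by (unfold a; apply sin_half_le_compat; nra).
  assert (Ha1 : a <= 1) by (unfold a; apply SIN_bound).
  assert (Hcos : cos (s * x) - 1 = - 2 * a * a).
  { unfold a. replace (s * x) with (2 * (s * x / 2)) at 1 by field. rewrite cos_2a_sin. ring. }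
  rewrite Hcos.
  set (X := -2 * a * a * c / sin (x / 2)).
  assert (HX : X * sin (x / 2) = -2 * a * a * c) by (unfold X; field; lra).
  apply Rabs_le_between in Hc.
  assert (a * a <= sin (x / 2)) by nra.
  apply Rabs_le. split; nra.
Qed.

Lemma Rabs_cosm1_div_sin_le x : 0 < x <= PI -> Rabs (cosm1_div_sin x) <= 2.
Proof.
  intros Hx. unfold cosm1_div_sin. rewrite <- (Rmult_1_r (cos (s * x) - 1)).
  apply Rabs_cosm1_mul_div_sin_le; [exact Hx | rewrite Rabs_R1; lra].
Qed.

Lemma Rabs_cosm1_mul_dirichlet_le N x : 0 < x <= PI ->
  Rabs ((cos (s * x) - 1) * dirichlet N x) <= 2.
Proof.
  intros Hx. assert (Hb : 0 < sin (x / 2)) by (apply sin_half_gt0; auto).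
  replace (dirichlet N x) with (sin ((INR N + / 2) * x) / sin (x / 2))
    by (rewrite <- dirichlet_mul_sin; field; lra).
  unfold Rdiv. rewrite <- Rmult_assoc.
  apply Rabs_cosm1_mul_div_sin_le; [exact Hx | apply Rabs_le, SIN_bound].
Qed.

Lemma Rabs_cosm1_div_sin'_le d x : 0 < d -> d <= x <= PI ->
  Rabs (cosm1_div_sin' x) <= 2 / sin (d / 2) ^ 2.
Proof.
  intros Hd Hx.
  assert (Hb : 0 < sin (d / 2)) by (apply sin_half_gt0; lra).
  assert (Hbx : sin (d / 2) <= sin (x / 2)) by (apply sin_half_le_compat; lra).
  unfold cosm1_div_sin', Rdiv. rewrite Rabs_mult.
  rewrite (Rabs_pos_eq (/ _)) by (left; apply Rinv_0_lt_compat; nra).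
  apply Rmult_le_compat; [apply Rabs_pos | left; apply Rinv_0_lt_compat; nra | |
                          apply Rinv_le_contravar; nra].
  pose proof (SIN_bound (s * x)). pose proof (SIN_bound (x / 2)).
  pose proof (COS_bound (s * x)). pose proof (COS_bound (x / 2)).
  set (u := sin (s * x)) in *. set (v := sin (x / 2)) in *.
  set (w := cos (s * x)) in *. set (z := cos (x / 2)) in *.
  assert (-1 <= u * v <= 1) by (split; nra).
  assert (-1 <= s * (u * v) <= 1) by (split; nra).
  assert (-2 <= (w - 1) * z <= 2) by (split; nra).
  change (sin (x * / 2)) with v. change (cos (x * / 2)) with z.
  apply Rabs_le. split; nra.
Qed.

Lemma Rabs_RInt_cosm1_div_sin_mul_sin_le d M : 0 < d < PI -> 0 < M ->
  Rabs (RInt (fun x => cosm1_div_sin x * sin (M * x)) d PI)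
  <= (2 * 2 + (PI - d) * (2 / sin (d / 2) ^ 2)) / M.
Proof.
  intros Hd HM.
  apply (Rabs_RInt_mul_sin_le cosm1_div_sin cosm1_div_sin'); [lra | exact HM | | | |];
    intros x Hx; assert (Hsx : 0 < sin (x / 2)) by (apply sin_half_gt0; lra).
  - apply is_derive_cosm1_div_sin. lra.
  - apply (ex_derive_continuous cosm1_div_sin'). unfold cosm1_div_sin'.
    auto_derive. apply Rgt_not_eq. change (x * / 2) with (x / 2). nra.
  - apply Rabs_cosm1_div_sin_le. lra.
  - apply Rabs_cosm1_div_sin'_le; lra.
Qed.

(* Near 0 the integrand is bounded by 2; on [d, PI] it equals
   [cosm1_div_sin x * sin ((N + 1/2) x)], whose integral is O(1/N). *)
Lemma RInt_cosm1_mul_dirichlet_tendsto0 eps : 0 < eps -> exists N0, forall N, (N0 <= N)%nat ->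
  Rabs (RInt (fun x => (cos (s * x) - 1) * dirichlet N x) 0 PI) < eps.
Proof.
  intros He. pose proof PI_RGT_0 as HPI.
  set (d := Rmin (eps / 8) (PI / 2)).
  assert (Hd : 0 < d < PI)
    by (unfold d; split; [apply Rmin_pos | eapply Rle_lt_trans; [apply Rmin_r |]]; lra).
  assert (Hd8 : d <= eps / 8) by apply Rmin_l.
  assert (Hsd : 0 < sin (d / 2)) by (apply sin_half_gt0; lra).
  set (C := 2 * 2 + (PI - d) * (2 / sin (d / 2) ^ 2)).
  assert (HC : 0 < C).
  { unfold C. assert (0 < 2 / sin (d / 2) ^ 2) by (apply Rdiv_lt_0_compat; nra). nra. }
  destruct (INR_unbounded (2 * C / eps)) as [N0 HN0].
  exists N0. intros N HN. pose proof (le_INR _ _ HN).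
  set (M := INR N + / 2).
  assert (HM : 0 < M) by (unfold M; pose proof (pos_INR N); lra).
  set (f := fun x => (cos (s * x) - 1) * dirichlet N x).
  assert (Hex : forall a b, ex_RInt f a b).
  { intros a b. apply ex_RInt_cont. intros x _.
    apply continuous_Rmult; [| apply continuous_dirichlet].
    apply (ex_derive_continuous (fun x => cos (s * x) - 1)). auto_derive. auto. }
  rewrite <- (RInt_Chasles_R f 0 d PI) by auto.
  assert (B1 : Rabs (RInt f 0 d) <= (d - 0) * 2).
  { apply abs_RInt_le_const; [lra | auto |]. intros x Hx.
    destruct (Req_dec x 0) as [-> | Hx0].
    - unfold f. rewrite Rmult_0_r, cos_0, Rminus_diag, Rmult_0_l, Rabs_R0. lra.
    - apply Rabs_cosm1_mul_dirichlet_le. lra. }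
  assert (E2 : RInt f d PI = RInt (fun x => cosm1_div_sin x * sin (M * x)) d PI).
  { apply RInt_ext_R. intros x Hx. rewrite Rmin_left, Rmax_right in Hx by lra.
    assert (0 < sin (x / 2)) by (apply sin_half_gt0; lra).
    unfold f, cosm1_div_sin, M. rewrite <- (dirichlet_mul_sin N x). field. lra. }
  assert (B2 : Rabs (RInt f d PI) <= C / M)
    by (rewrite E2; apply Rabs_RInt_cosm1_div_sin_mul_sin_le; assumption).
  assert (C / M < eps / 2).
  { apply Rmult_lt_reg_r with M; [exact HM |]. unfold Rdiv.
    rewrite Rmult_assoc, Rinv_l, Rmult_1_r by lra.
    apply Rmult_lt_compat_r with (r := eps) in HN0; [| exact He]. unfold Rdiv in HN0.
    rewrite Rmult_assoc, Rinv_l, Rmult_1_r in HN0 by lra. unfold M. nra. }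
  eapply Rle_lt_trans; [apply Rabs_triang | lra].
Qed.

End Riemann_Lebesgue.

Lemma cos_pfrac_eq s N : 0 < s < 1 ->
  sin (PI * s) * cos_pfrac s N = RInt (fun x => (cos (s * x) - 1) * dirichlet N x) 0 PI + PI.
Proof.
  intros Hs. rewrite <- RInt_cos_mul_dirichlet by exact Hs.
  transitivity (RInt (fun x => (cos (s * x) - 1) * dirichlet N x) 0 PI + RInt (dirichlet N) 0 PI).
  2:{ rewrite (is_RInt_unique _ _ _ _ (is_RInt_dirichlet N)). reflexivity. }
  assert (Hc : forall x, continuous (fun x => cos (s * x)) x)
    by (intros x; apply (ex_derive_continuous (fun x => cos (s * x))); auto_derive; auto).
  rewrite <- RInt_plus_R.
  - apply RInt_ext_R. intros; ring.
  - apply ex_RInt_cont. intros x _. apply continuous_Rmult; [| apply continuous_dirichlet].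
    apply (continuous_minus (fun x => cos (s * x)) (fun _ => 1));
      [apply Hc | apply continuous_const].
  - apply ex_RInt_cont. intros; apply continuous_dirichlet.
Qed.

Lemma csc_pfrac_tendsto s : 0 < s < 1 ->
  forall eps, 0 < eps -> exists N0, forall N, (N0 <= N)%nat ->
  Rabs (csc_pfrac s N - PI / sin (PI * s)) < eps.
Proof.
  intros Hs eps He.
  assert (Hsin : 0 < sin (PI * s)) by (apply sin_gt_0; pose proof PI_RGT_0; nra).
  destruct (RInt_cosm1_mul_dirichlet_tendsto0 s Hs (eps * sin (PI * s) / 2)) as [N1 HN1].
  { apply Rdiv_lt_0_compat; nra. }
  destruct (INR_unbounded (/ (eps / 2))) as [N2 HN2].
  exists (S (Nat.max N1 N2)). intros [| N] HN; [lia |].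
  specialize (HN1 N ltac:(lia)).
  assert (HN2' : INR N2 <= INR N) by (apply le_INR; lia).
  rewrite csc_pfrac_S by exact Hs.
  pose proof (cos_pfrac_eq s N Hs) as HV.
  set (r := RInt (fun x => (cos (s * x) - 1) * dirichlet N x) 0 PI) in *.
  replace (cos_pfrac s N + (-1) ^ N / (INR N + 1 - s) - PI / sin (PI * s)) with
    (r / sin (PI * s) + (-1) ^ N / (INR N + 1 - s))
    by (pose proof (pos_INR N); replace r with (sin (PI * s) * cos_pfrac s N - PI) by lra;
        field; split; lra).
  eapply Rle_lt_trans; [apply Rabs_triang |].
  unfold Rdiv. rewrite !Rabs_mult, pow_1_abs, Rmult_1_l.
  rewrite (Rabs_pos_eq (/ sin _)) by (left; apply Rinv_0_lt_compat; auto).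
  rewrite (Rabs_pos_eq (/ (INR N + 1 - s)))
    by (left; apply Rinv_0_lt_compat; pose proof (pos_INR N); lra).
  assert (Rabs r * / sin (PI * s) < eps / 2).
  { apply Rmult_lt_reg_r with (sin (PI * s)); auto.
    rewrite Rmult_assoc, Rinv_l, Rmult_1_r by lra. unfold Rdiv in HN1. lra. }
  assert (/ (INR N + 1 - s) < eps / 2) by (apply (Rinv_lt_of_INR_gt _ _ N2); lra).
  lra.
Qed.

Definition Gint_infty p := / p * PI / sin (PI * / p).

Lemma Gseries_tendsto p : 1 < p -> forall eps, 0 < eps -> exists N0, forall N, (N0 <= N)%nat ->
  Rabs (Gseries p N - Gint_infty p) < eps.
Proof.
  intros Hp eps He.
  set (s := / p).
  assert (Hs : 0 < s < 1).
  { unfold s. split; [apply Rinv_0_lt_compat; lra |].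
    rewrite <- Rinv_1. apply Rinv_lt_contravar; lra. }
  destruct (csc_pfrac_tendsto s Hs (eps / s)) as [N0 HN0]; [apply Rdiv_lt_0_compat; lra |].
  exists N0. intros N HN. specialize (HN0 N HN).
  assert (E : Gseries p N = s * csc_pfrac s N).
  { unfold Gseries, csc_pfrac. rewrite <- fsum_scal. apply fsum_ext.
    intros n _. pose proof (pos_INR n). unfold s.
    replace (INR n + / p) with ((INR n * p + 1) * / p) by (field; lra).
    replace (INR n + 1 - / p) with (((INR n + 1) * p - 1) * / p) by (field; lra).
    rewrite !Rinv_mult, !Rinv_inv. field. split; nra. }
  assert (Hsin : 0 < sin (PI * s)) by (apply sin_gt_0; pose proof PI_RGT_0; nra).
  rewrite E. unfold Gint_infty. fold s.
  replace (s * csc_pfrac s N - s * PI / sin (PI * s)) with (s * (csc_pfrac s N - PI / sin (PI * s)))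
    by (field; lra).
  rewrite Rabs_mult, Rabs_pos_eq by lra.
  apply Rmult_lt_reg_l with (/ s); [apply Rinv_0_lt_compat; lra |].
  rewrite <- Rmult_assoc, Rinv_l, Rmult_1_l by lra. unfold Rdiv in HN0. lra.
Qed.

Lemma Gint_tendsto_infty p : 1 < p -> forall eps, 0 < eps ->
  exists X0, 1 <= X0 /\ forall X, X0 <= X -> Rabs (Gint p X - Gint_infty p) < eps.
Proof. intros Hp. apply Gint_tendsto; [exact Hp | apply Gseries_tendsto, Hp]. Qed.

Lemma Gint_le_infty p X : 1 < p -> Gint p X <= Gint_infty p.
Proof. intros Hp. apply Gint_le_of_tendsto; [exact Hp | apply Gint_tendsto_infty, Hp]. Qed.

(** * Improper integrals and comparison with Gaussian integrals *)

Lemma Rint_RInt (f : R -> R) a b : ex_RInt f a b -> Rint f a b = RInt f a b.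
Proof.
  intros H. unfold Rint.
  assert (Hex : exists l, exists pr : Riemann_integrable f a b, RiemannInt pr = l).
  { exists (RInt f a b), (ex_RInt_Reals_0 _ _ _ H). symmetry; apply RInt_Reals. }
  destruct (epsilon_spec (inhabits 0) _ Hex) as [pr <-]. symmetry; apply RInt_Reals.
Qed.

Lemma Rint_inf_unique (f : R -> R) a l :
  (forall eps, 0 < eps -> exists M, forall T, M < T -> Rabs (Rint f a T - l) < eps) ->
  Rint_inf f a = l.
Proof.
  intros Hl. unfold Rint_inf.
  assert (Hex : exists l, forall eps, 0 < eps ->
            exists M, forall T, M < T -> Rabs (Rint f a T - l) < eps) by (exists l; exact Hl).
  pose proof (epsilon_spec (inhabits 0) _ Hex) as Hl'.
  set (l' := epsilon _ _) in *.
  destruct (Req_dec l' l) as [E | E]; [exact E | exfalso].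
  assert (He : 0 < Rabs (l' - l) / 2) by (apply Rdiv_lt_0_compat; [apply Rabs_pos_lt |]; lra).
  destruct (Hl' _ He) as [M1 HM1]. destruct (Hl _ He) as [M2 HM2].
  set (T := Rmax M1 M2 + 1).
  specialize (HM1 T ltac:(unfold T; pose proof (Rmax_l M1 M2); lra)).
  specialize (HM2 T ltac:(unfold T; pose proof (Rmax_r M1 M2); lra)).
  assert (Rabs (l' - l) <= Rabs (Rint f a T - l') + Rabs (Rint f a T - l)); [| lra].
  replace (l' - l) with (- (Rint f a T - l') + (Rint f a T - l)) by ring.
  eapply Rle_trans; [apply Rabs_triang | rewrite Rabs_Ropp; lra].
Qed.

Lemma Rint_inf_is_lub (f F : R -> R) h :
  (forall T, h <= T -> Rint f h T = RInt F h T) ->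
  (forall x, h <= x -> continuous F x) ->
  (forall x, h <= x -> 0 <= F x) ->
  (exists B, forall T, h <= T -> RInt F h T <= B) ->
  is_lub (fun y => exists T, h <= T /\ y = RInt F h T) (Rint_inf f h).
Proof.
  intros Hf Hc Hpos [B HB].
  set (S := fun y => exists T, h <= T /\ y = RInt F h T).
  destruct (completeness S) as [l [Hub Hlub]].
  { exists B. intros y [T [HT ->]]. apply HB, HT. }
  { exists (RInt F h h), h. split; [lra | reflexivity]. }
  assert (Hmono : forall a b, h <= a -> a <= b -> RInt F h a <= RInt F h b).
  { intros a b Ha Hab.
    assert (Hex : forall u v, h <= u -> u <= v -> ex_RInt F u v).
    { intros u v Hu Huv. apply ex_RInt_cont. intros x Hx.
      rewrite Rmin_left, Rmax_right in Hx by lra. apply Hc; lra. }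
    rewrite <- (RInt_Chasles_R F h a b) by (apply Hex; lra).
    assert (0 <= RInt F a b); [| lra].
    apply RInt_ge_0; [exact Hab | apply Hex; lra | intros x Hx; apply Hpos; lra]. }
  replace (Rint_inf f h) with l; [split; assumption |].
  symmetry. apply Rint_inf_unique. intros eps He.
  assert (HT0 : exists T0, h <= T0 /\ l - eps < RInt F h T0).
  { apply Classical_Prop.NNPP. intros Hn.
    assert (l <= l - eps); [| lra].
    apply Hlub. intros y [T [HT ->]].
    destruct (Rle_lt_dec (RInt F h T) (l - eps)); [assumption |].
    exfalso; apply Hn; exists T; auto. }
  destruct HT0 as [T0 [HT0 HT0']]. exists T0. intros T HT.
  rewrite Hf by lra. pose proof (Hmono T0 T HT0 ltac:(lra)).
  assert (RInt F h T <= l) by (apply Hub; exists T; split; [lra | reflexivity]).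
  apply Rabs_lt_between. lra.
Qed.

Lemma is_RInt_gauss c a b : 0 < c ->
  is_RInt (fun r => exp (- c * r ^ 2) * r) a b ((exp (- c * a ^ 2) - exp (- c * b ^ 2)) / (2 * c)).
Proof.
  intros Hc.
  replace ((exp (- c * a ^ 2) - exp (- c * b ^ 2)) / (2 * c)) with
    (- exp (- c * b ^ 2) / (2 * c) - - exp (- c * a ^ 2) / (2 * c)) by (field; lra).
  apply (is_RInt_derive_R (fun r => - exp (- c * r ^ 2) / (2 * c))).
  - intros x _. auto_derive; [auto |]. replace (x * (x * 1)) with (x ^ 2) by ring. field. lra.
  - intros x _. apply (ex_derive_continuous (fun r => exp (- c * r ^ 2) * r)). auto_derive. auto.
Qed.

Lemma exp_neg_sq_lt c eta h : 0 < c -> 0 < eta -> exists T, h <= T /\ exp (- c * T ^ 2) < eta.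
Proof.
  intros Hc He. set (T := Rmax h (Rmax 1 (- ln eta / c + 1))).
  pose proof (Rmax_l h (Rmax 1 (- ln eta / c + 1))).
  pose proof (Rmax_r h (Rmax 1 (- ln eta / c + 1))).
  pose proof (Rmax_l 1 (- ln eta / c + 1)). pose proof (Rmax_r 1 (- ln eta / c + 1)).
  fold T in H, H0. exists T. split; [exact H |].
  rewrite <- (exp_ln eta He). apply exp_increasing.
  assert (- ln eta < c * T).
  { apply Rlt_le_trans with (c * (- ln eta / c + 1)); [field_simplify; lra |].
    apply Rmult_le_compat_l; lra. }
  assert (c * T <= c * T ^ 2) by (apply Rmult_le_compat_l; [lra | simpl; nra]).
  lra.
Qed.

Section Gauss_comparison.
Variables (F : R -> R) (h c : R).
Hypothesis Hc : 0 < c.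
Hypothesis HF : forall x, h <= x -> continuous F x.

Lemma RInt_le_gauss A T : 0 <= A ->
  (forall r, h <= r -> F r <= A * (exp (- c * r ^ 2) * r)) ->
  h <= T -> RInt F h T <= A * exp (- c * h ^ 2) / (2 * c).
Proof.
  intros HA Hle HT.
  apply Rle_trans with (RInt (fun r => A * (exp (- c * r ^ 2) * r)) h T).
  - apply RInt_le; [exact HT | | | intros x Hx; apply Hle; lra].
    + apply ex_RInt_cont. intros x Hx. rewrite Rmin_left, Rmax_right in Hx by lra. apply HF; lra.
    + eexists. apply is_RInt_scal_R, is_RInt_gauss, Hc.
  - rewrite (is_RInt_unique _ _ _ _ (is_RInt_scal_R _ _ _ A _ (is_RInt_gauss c h T Hc))).
    pose proof (exp_pos (- c * T ^ 2)). unfold Rdiv. rewrite Rmult_assoc.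
    apply Rmult_le_compat_l; [exact HA |].
    apply Rmult_le_compat_r; [left; apply Rinv_0_lt_compat |]; lra.
Qed.

Lemma gauss_le_RInt_ub l :
  (forall r, h <= r -> exp (- c * r ^ 2) * r <= F r) ->
  (forall T, h <= T -> RInt F h T <= l) ->
  exp (- c * h ^ 2) / (2 * c) <= l.
Proof.
  intros Hge Hl. apply Rle_plus_epsilon. intros eta Heta.
  destruct (exp_neg_sq_lt c (2 * c * eta) h Hc ltac:(nra)) as [T [HT HTeta]].
  specialize (Hl T HT).
  assert ((exp (- c * h ^ 2) - exp (- c * T ^ 2)) / (2 * c) <= RInt F h T).
  { rewrite <- (is_RInt_unique _ _ _ _ (is_RInt_gauss c h T Hc)).
    apply RInt_le; [exact HT | eexists; apply is_RInt_gauss, Hc | | intros x Hx; apply Hge; lra].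
    apply ex_RInt_cont. intros x Hx. rewrite Rmin_left, Rmax_right in Hx by lra. apply HF; lra. }
  assert (exp (- c * T ^ 2) / (2 * c) < eta).
  { apply Rmult_lt_reg_r with (2 * c); [lra |]. unfold Rdiv.
    rewrite Rmult_assoc, Rinv_l, Rmult_1_r by lra. lra. }
  unfold Rdiv in *. lra.
Qed.

End Gauss_comparison.

(** * The function [psi] *)

Definition psi_p (alpha : R) : R := alpha / (alpha - 2).

Definition psi_s (alpha : R) : R := (alpha - 2) / alpha.

Section Psi.
Variable alpha : R.
Hypothesis Ha : 2 < alpha.

Lemma psi_p_gt1 : 1 < psi_p alpha.
Proof.
  unfold psi_p. apply Rmult_lt_reg_r with (alpha - 2); [lra |].
  unfold Rdiv. rewrite Rmult_assoc, Rinv_l; lra.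
Qed.

Lemma psi_s_gt0 : 0 < psi_s alpha.
Proof. unfold psi_s. apply Rdiv_lt_0_compat; lra. Qed.

Lemma psi_s_mul_p : psi_s alpha * psi_p alpha = 1.
Proof. unfold psi_s, psi_p. field. lra. Qed.

Lemma hyp2F1_Gint z : 0 < z ->
  hyp2F1 alpha z = Gint (psi_p alpha) (Rpower z (psi_s alpha)) / Rpower z (psi_s alpha).
Proof.
  intros Hz. unfold hyp2F1. fold (psi_p alpha).
  pose proof psi_p_gt1 as Hp. set (p := psi_p alpha) in *.
  set (c := Rpower z (psi_s alpha)).
  assert (Hc : 0 < c) by apply exp_pos.
  assert (Hcp : Rpower c p = z)
    by (unfold c, p; rewrite Rpower_mult, psi_s_mul_p; apply Rpower_1, Hz).
  assert (Hsubst : forall u, / (1 + z * rpow u p) = inv1p p (c * u + 0)).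
  { intros u. unfold inv1p. rewrite Rplus_0_r. do 2 f_equal.
    destruct (Rlt_le_dec 0 u).
    - rewrite !rpow_Rpower, <- Rpower_mult_distr, Hcp by nra. reflexivity.
    - rewrite !rpow_le0 by nra. ring. }
  assert (Hex : ex_RInt (inv1p p) (c * 0 + 0) (c * 1 + 0)) by (apply ex_RInt_inv1p; lra).
  rewrite Rint_RInt.
  - rewrite (RInt_ext_R _ (fun u => / c * scal c (inv1p p (c * u + 0))))
      by (intros; rewrite Hsubst; unfold scal; simpl; unfold mult; simpl; field; lra).
    rewrite RInt_scal_R by (apply (ex_RInt_comp_lin (inv1p p)); exact Hex).
    replace (RInt (fun u => scal c (inv1p p (c * u + 0))) 0 1)
      with (RInt (inv1p p) (c * 0 + 0) (c * 1 + 0))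
      by (symmetry; exact (RInt_comp_lin _ c 0 0 1 Hex)).
    unfold Gint. rewrite Rmult_0_r, Rmult_1_r, !Rplus_0_r. unfold Rdiv. ring.
  - apply (ex_RInt_ext (fun u => inv1p p (c * u + 0))); [intros; rewrite Hsubst; reflexivity |].
    apply ex_RInt_cont. intros x _.
    apply (continuous_comp (fun u => c * u + 0) (inv1p p)); [| apply continuous_inv1p; lra].
    apply (ex_derive_continuous (fun u => c * u + 0)). auto_derive. auto.
Qed.

Lemma psi_Gint z : 0 < z ->
  psi alpha z =
  2 / (alpha - 2) * Rpower z (2 / alpha) * Gint (psi_p alpha) (Rpower z (psi_s alpha)).
Proof.
  intros Hz. unfold psi. rewrite hyp2F1_Gint by exact Hz.
  assert (Hsplit : z = Rpower z (2 / alpha) * Rpower z (psi_s alpha)).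
  { rewrite <- Rpower_plus. unfold psi_s.
    replace (2 / alpha + (alpha - 2) / alpha) with 1 by (field; lra). rewrite Rpower_1; auto. }
  rewrite Hsplit at 1. assert (0 < Rpower z (psi_s alpha)) by apply exp_pos.
  field. lra.
Qed.

Lemma psi_gt0 z : 0 < z -> 0 < psi alpha z.
Proof.
  intros Hz. rewrite psi_Gint by exact Hz.
  apply Rmult_lt_0_compat;
    [apply Rmult_lt_0_compat; [apply Rdiv_lt_0_compat; lra | apply exp_pos] |].
  apply Gint_gt0; [apply psi_p_gt1 | apply exp_pos].
Qed.

End Psi.

(** * Coverage probabilities *)

Section Coverage.
Variables h alpha theta : R.
Hypothesis hh : 0 < h.
Hypothesis halpha : 2 < alpha.
Hypothesis htheta : 0 < theta.

Definition psi_coef := 2 / (alpha - 2) * Rpower theta (2 / alpha).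

Definition sir_arg r := theta * Rpower h (- alpha) * Rpower r alpha.

Definition rate r := psi_coef * Gint (psi_p alpha) (Rpower (sir_arg r) (psi_s alpha)).

Definition rate_infty := psi_coef * Gint_infty (psi_p alpha).

Definition Pcov_S_integrand lam r := exp (- (PI * lam * rate r) * r ^ 2) * r.

Lemma psi_coef_gt0 : 0 < psi_coef.
Proof. apply Rmult_lt_0_compat; [apply Rdiv_lt_0_compat; lra | apply exp_pos]. Qed.

Lemma sir_arg_gt0 r : 0 < sir_arg r.
Proof. unfold sir_arg. pose proof (exp_pos (- alpha * ln h)). pose proof (exp_pos (alpha * ln r)).
  unfold Rpower. apply Rmult_lt_0_compat; [apply Rmult_lt_0_compat |]; lra. Qed.

Lemma sir_arg_le_compat r1 r2 : 0 < r1 <= r2 -> sir_arg r1 <= sir_arg r2.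
Proof.
  intros Hr. unfold sir_arg. apply Rmult_le_compat_l.
  - left. apply Rmult_lt_0_compat; [lra | apply exp_pos].
  - apply Rle_Rpower_l; lra.
Qed.

Lemma sir_arg_surj x : 0 < x -> exists r, 0 < r /\ sir_arg r = x.
Proof.
  intros Hx. set (y := x * Rpower h alpha / theta).
  assert (Hy : 0 < y) by (unfold y; pose proof (exp_pos (alpha * ln h)); unfold Rpower in *;
    apply Rdiv_lt_0_compat; [apply Rmult_lt_0_compat |]; lra).
  exists (Rpower y (/ alpha)). split; [apply exp_pos |].
  unfold sir_arg. rewrite Rpower_mult, Rinv_l, Rpower_1 by lra.
  unfold y. rewrite Rpower_Ropp. pose proof (exp_pos (alpha * ln h)). unfold Rpower in *.
  field. lra.
Qed.

Lemma rate_le_compat r1 r2 : 0 < r1 <= r2 -> rate r1 <= rate r2.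
Proof.
  intros Hr. unfold rate. apply Rmult_le_compat_l; [left; apply psi_coef_gt0 |].
  apply Gint_le_compat; [apply psi_p_gt1; lra |].
  apply Rle_Rpower_l; [left; apply psi_s_gt0; lra |].
  split; [apply sir_arg_gt0 | apply sir_arg_le_compat, Hr].
Qed.

Lemma rate_gt0 r : 0 < rate r.
Proof.
  apply Rmult_lt_0_compat; [apply psi_coef_gt0 |].
  apply Gint_gt0; [apply psi_p_gt1; lra | apply exp_pos].
Qed.

Lemma rate_le_infty r : rate r <= rate_infty.
Proof.
  apply Rmult_le_compat_l; [left; apply psi_coef_gt0 |].
  apply Gint_le_infty, psi_p_gt1. lra.
Qed.

Lemma rate_infty_gt0 : 0 < rate_infty.
Proof. pose proof (rate_gt0 0). pose proof (rate_le_infty 0). lra. Qed.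

Lemma rate_tendsto e : 0 < e ->
  exists R0, h <= R0 /\ forall r, R0 <= r -> rate_infty - e <= rate r.
Proof.
  intros He. pose proof psi_coef_gt0.
  destruct (Gint_tendsto_infty (psi_p alpha) (psi_p_gt1 alpha halpha) (e / psi_coef))
    as [X0 [HX0 HX]]; [apply Rdiv_lt_0_compat; lra |].
  destruct (sir_arg_surj (Rpower X0 (psi_p alpha))) as [Y [HY HYX]]; [apply exp_pos |].
  exists (Rmax h Y). split; [apply Rmax_l |]. intros r Hr.
  pose proof (Rmax_l h Y). pose proof (Rmax_r h Y).
  assert (HXr : X0 <= Rpower (sir_arg r) (psi_s alpha)).
  { replace X0 with (Rpower (sir_arg Y) (psi_s alpha)).
    - apply Rle_Rpower_l; [left; apply psi_s_gt0; lra |].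
      split; [apply sir_arg_gt0 | apply sir_arg_le_compat; lra].
    - rewrite HYX, Rpower_mult, Rmult_comm, psi_s_mul_p by lra. apply Rpower_1. lra. }
  specialize (HX _ HXr). apply Rabs_lt_between in HX.
  unfold rate, rate_infty.
  assert (psi_coef * (e / psi_coef) = e) by (field; lra). nra.
Qed.

Lemma Rinv_rate_infty :
  / rate_infty = alpha * sin (2 * PI / alpha) / (2 * PI * Rpower theta (2 / alpha)).
Proof.
  unfold rate_infty, psi_coef, Gint_infty.
  assert (E1 : / psi_p alpha = (alpha - 2) / alpha) by (unfold psi_p; field; lra).
  assert (E2 : sin (PI * / psi_p alpha) = sin (2 * PI / alpha)).
  { rewrite E1, <- sin_PI_x. f_equal. field. lra. }
  assert (0 < sin (2 * PI / alpha)).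
  { pose proof PI_RGT_0. apply sin_gt_0; [apply Rdiv_lt_0_compat; lra |].
    apply Rmult_lt_reg_r with alpha; [lra |]. unfold Rdiv.
    rewrite Rmult_assoc, Rinv_l by lra. nra. }
  pose proof (exp_pos (2 / alpha * ln theta)). pose proof PI_RGT_0.
  rewrite E2, E1. unfold Rpower in *. field. repeat split; lra.
Qed.

Lemma h2_mul_psi_sir_arg r : 0 < r ->
  h ^ 2 * psi alpha (theta * rpow h (- alpha) * rpow r alpha) = rate r * r ^ 2.
Proof.
  intros Hr. rewrite !rpow_Rpower by lra. fold (sir_arg r).
  rewrite psi_Gint by (exact halpha || apply sir_arg_gt0).
  assert (Hz : Rpower (sir_arg r) (2 / alpha) = Rpower theta (2 / alpha) * / h ^ 2 * r ^ 2).
  { unfold sir_arg.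
    rewrite <- !Rpower_mult_distr by (try apply Rmult_lt_0_compat; try apply exp_pos; lra).
    rewrite !Rpower_mult.
    replace (- alpha * (2 / alpha)) with (- INR 2) by (simpl; field; lra).
    replace (alpha * (2 / alpha)) with (INR 2) by (simpl; field; lra).
    rewrite Rpower_Ropp, !Rpower_pow by lra. reflexivity. }
  rewrite Hz. unfold rate, psi_coef. field. lra.
Qed.

Lemma continuous_Pcov_S_integrand lam r : 0 < r -> continuous (Pcov_S_integrand lam) r.
Proof.
  intros Hr.
  assert (Hz : continuous (fun r => Rpower (sir_arg r) (psi_s alpha)) r).
  { apply (ex_derive_continuous (fun r => Rpower (sir_arg r) (psi_s alpha))).
    pose proof (sir_arg_gt0 r). unfold sir_arg, Rpower in *. auto_derive. repeat split; lra. }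
  assert (Hrate : continuous rate r).
  { apply continuous_Rmult; [apply continuous_const |].
    apply (continuous_comp (fun r => Rpower (sir_arg r) (psi_s alpha)) (Gint (psi_p alpha)));
      [exact Hz | apply continuous_Gint, psi_p_gt1; lra]. }
  apply continuous_Rmult; [| apply continuous_id].
  apply (continuous_comp (fun r => - (PI * lam * rate r) * r ^ 2) exp).
  - apply continuous_Rmult; [| apply continuous_Rpow, continuous_id].
    apply (continuous_opp (fun r => PI * lam * rate r)).
    apply continuous_Rmult; [apply continuous_const | exact Hrate].
  - apply (ex_derive_continuous exp). auto_derive. auto.
Qed.

Lemma RInt_Pcov_S_integrand_le lam T : 0 < lam -> h <= T ->
  RInt (Pcov_S_integrand lam) h T
  <= exp (- (PI * lam * rate h) * h ^ 2) / (2 * (PI * lam * rate h)).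
Proof.
  intros Hlam HT. pose proof PI_RGT_0. pose proof (rate_gt0 h).
  rewrite <- (Rmult_1_l (exp _)).
  apply RInt_le_gauss; [| intros; apply continuous_Pcov_S_integrand; lra | lra | | exact HT].
  - apply Rmult_lt_0_compat; [nra | assumption].
  - intros r Hr. unfold Pcov_S_integrand. rewrite Rmult_1_l.
    apply Rmult_le_compat_r; [lra |]. apply exp_le_compat.
    pose proof (rate_le_compat h r ltac:(lra)). assert (0 <= r ^ 2) by (apply pow_le; lra).
    assert (PI * lam * rate h <= PI * lam * rate r) by (apply Rmult_le_compat_l; nra). nra.
Qed.

Lemma Pcov_S_lub lam : 0 < lam ->
  is_lub (fun y => exists T, h <= T /\ y = RInt (Pcov_S_integrand lam) h T)
         (Pcov_S alpha h theta lam / (2 * PI * lam)).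
Proof.
  intros Hlam. pose proof PI_RGT_0.
  assert (Hint : forall r, 0 < r ->
    exp (- PI * lam * h ^ 2 * psi alpha (theta * rpow h (- alpha) * rpow r alpha)) * r
    = Pcov_S_integrand lam r).
  { intros r Hr. unfold Pcov_S_integrand. do 2 f_equal.
    rewrite Rmult_assoc, h2_mul_psi_sir_arg by exact Hr. ring. }
  unfold Pcov_S. replace (2 * PI * lam * _ / (2 * PI * lam)) with
    (Rint_inf (fun r => exp (- PI * lam * h ^ 2 *
        psi alpha (theta * rpow h (- alpha) * rpow r alpha)) * r) h) by (field; nra).
  apply Rint_inf_is_lub.
  - intros T HT. rewrite Rint_RInt.
    + apply RInt_ext_R. intros x Hx. rewrite Rmin_left, Rmax_right in Hx by lra. apply Hint. lra.
    + apply (ex_RInt_ext (Pcov_S_integrand lam)).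
      * intros x Hx. rewrite Rmin_left, Rmax_right in Hx by lra. symmetry; apply Hint; lra.
      * apply ex_RInt_cont. intros x Hx. rewrite Rmin_left, Rmax_right in Hx by lra.
        apply continuous_Pcov_S_integrand; lra.
  - intros; apply continuous_Pcov_S_integrand; lra.
  - intros r Hr. unfold Pcov_S_integrand. left. apply Rmult_lt_0_compat; [apply exp_pos | lra].
  - exists (exp (- (PI * lam * rate h) * h ^ 2) / (2 * (PI * lam * rate h))).
    intros T HT. apply RInt_Pcov_S_integrand_le; assumption.
Qed.

Lemma Pcov_C_eq lam : Pcov_C alpha h theta lam =
  / (psi alpha theta + 1) * exp (- (PI * lam * h ^ 2 * psi alpha theta)).
Proof. unfold Pcov_C. do 3 f_equal. ring. Qed.

Lemma Pcov_C_lambda0 eps : 0 < eps -> exists delta, 0 < delta /\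
  forall lam, 0 < lam < delta -> Rabs (Pcov_C alpha h theta lam - / (psi alpha theta + 1)) < eps.
Proof.
  intros He. pose proof PI_RGT_0. pose proof (psi_gt0 alpha halpha theta htheta) as Hpsi.
  set (k := PI * h ^ 2 * psi alpha theta).
  assert (Hk : 0 < k)
    by (unfold k; apply Rmult_lt_0_compat; [apply Rmult_lt_0_compat; [| apply pow_lt] |]; lra).
  exists (eps / k). split; [apply Rdiv_lt_0_compat; lra |]. intros lam [Hl0 Hl].
  assert (Hinv : 0 < / (psi alpha theta + 1) < 1).
  { split; [apply Rinv_0_lt_compat; lra |]. rewrite <- Rinv_1. apply Rinv_lt_contravar; lra. }
  rewrite Pcov_C_eq. set (x := PI * lam * h ^ 2 * psi alpha theta).
  assert (Hx : 0 < x < eps).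
  { replace x with (lam * k) by (unfold x, k; ring). split; [nra |].
    apply Rmult_lt_compat_r with (r := k) in Hl; [| exact Hk].
    unfold Rdiv in Hl. rewrite Rmult_assoc, Rinv_l, Rmult_1_r in Hl; lra. }
  pose proof (exp_ineq1_le (- x)). pose proof (exp_le_compat (- x) 0 ltac:(lra)).
  rewrite exp_0 in *.
  replace (/ (psi alpha theta + 1) * exp (- x) - / (psi alpha theta + 1))
    with (/ (psi alpha theta + 1) * (exp (- x) - 1)) by ring.
  rewrite Rabs_mult, Rabs_pos_eq, Rabs_left1 by lra. nra.
Qed.

Lemma Pcov_C_lambda_infty eps : 0 < eps -> exists M, forall lam, M < lam ->
  Rabs (Pcov_C alpha h theta lam) < eps.
Proof.
  intros He. pose proof PI_RGT_0. pose proof (psi_gt0 alpha halpha theta htheta) as Hpsi.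
  set (k := PI * h ^ 2 * psi alpha theta).
  assert (Hk : 0 < k)
    by (unfold k; apply Rmult_lt_0_compat; [apply Rmult_lt_0_compat; [| apply pow_lt] |]; lra).
  exists (/ (eps * k)). intros lam Hl.
  assert (Hek : 0 < eps * k) by nra.
  assert (Hlk : 1 < lam * (eps * k)).
  { apply Rmult_lt_compat_r with (r := eps * k) in Hl; [| exact Hek]. rewrite Rinv_l in Hl; lra. }
  assert (Hinv : 0 < / (psi alpha theta + 1) < 1).
  { split; [apply Rinv_0_lt_compat; lra |]. rewrite <- Rinv_1. apply Rinv_lt_contravar; lra. }
  rewrite Pcov_C_eq. set (x := PI * lam * h ^ 2 * psi alpha theta).
  assert (Hx : x = lam * k) by (unfold x, k; ring).
  assert (Hx0 : 0 < x) by (rewrite Hx; apply Rmult_lt_0_compat; [nra | exact Hk]).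
  pose proof (exp_neg_lt_inv x Hx0). pose proof (exp_pos (- x)).
  assert (/ x < eps).
  { apply Rmult_lt_reg_r with x; [exact Hx0 |]. rewrite Rinv_l by lra. nra. }
  rewrite Rabs_pos_eq by nra. nra.
Qed.

Lemma Pcov_S_ge lam : 0 < lam -> / rate_infty - PI * lam * h ^ 2 <= Pcov_S alpha h theta lam.
Proof.
  intros Hlam. pose proof PI_RGT_0. pose proof rate_infty_gt0 as HQ.
  destruct (Pcov_S_lub lam Hlam) as [Hub _].
  set (c := PI * lam * rate_infty).
  assert (Hc : 0 < c) by (unfold c; apply Rmult_lt_0_compat; nra).
  assert (Hgauss : exp (- c * h ^ 2) / (2 * c) <= Pcov_S alpha h theta lam / (2 * PI * lam)).
  { apply (gauss_le_RInt_ub (Pcov_S_integrand lam) h c Hc).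
    - intros; apply continuous_Pcov_S_integrand; lra.
    - intros r Hr. unfold Pcov_S_integrand. apply Rmult_le_compat_r; [lra |].
      apply exp_le_compat. pose proof (rate_le_infty r). assert (0 <= r ^ 2) by (apply pow_le; lra).
      assert (PI * lam * rate r <= c) by (unfold c; apply Rmult_le_compat_l; nra). nra.
    - intros T HT. apply Hub. exists T. split; [exact HT | reflexivity]. }
  apply (Rmult_le_compat_l (2 * PI * lam)) in Hgauss; [| nra].
  replace (2 * PI * lam * (Pcov_S alpha h theta lam / (2 * PI * lam)))
    with (Pcov_S alpha h theta lam) in Hgauss by (field; nra).
  replace (2 * PI * lam * (exp (- c * h ^ 2) / (2 * c))) with (exp (- c * h ^ 2) * / rate_infty)
    in Hgauss by (unfold c; field; nra).
  pose proof (exp_ineq1_le (- c * h ^ 2)). pose proof (Rinv_0_lt_compat _ HQ).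
  assert (c * h ^ 2 * / rate_infty = PI * lam * h ^ 2) by (unfold c; field; lra).
  nra.
Qed.

Lemma Pcov_S_integrand_le lam c R0 r : 0 < lam -> 0 < c -> 0 < r ->
  (forall x, R0 <= x -> c <= PI * lam * rate x) ->
  Pcov_S_integrand lam r <= exp (c * R0 ^ 2) * (exp (- c * r ^ 2) * r).
Proof.
  intros Hlam Hc Hr Hrate. pose proof PI_RGT_0.
  unfold Pcov_S_integrand. rewrite <- Rmult_assoc, <- exp_plus.
  apply Rmult_le_compat_r; [lra |]. apply exp_le_compat.
  pose proof (rate_gt0 r). assert (0 <= r ^ 2) by (apply pow_le; lra).
  assert (0 <= PI * lam * rate r) by (apply Rmult_le_pos; nra).
  destruct (Rle_lt_dec R0 r) as [HrR | HrR].
  - specialize (Hrate r HrR). assert (0 <= c * R0 ^ 2) by (apply Rmult_le_pos, pow2_ge_0; lra).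
    assert (c * r ^ 2 <= PI * lam * rate r * r ^ 2) by (apply Rmult_le_compat_r; lra). lra.
  - assert (r ^ 2 <= R0 ^ 2) by (apply pow_incr; lra).
    assert (c * r ^ 2 <= c * R0 ^ 2) by (apply Rmult_le_compat_l; lra).
    assert (0 <= PI * lam * rate r * r ^ 2) by (apply Rmult_le_pos; lra). lra.
Qed.

(* Beyond [R0] the exponent rate is at least [rate_infty - e]; on [h, R0] the loss is paid by
   the factor [exp (c R0^2)], which is close to 1 when [lam R0^2] is small. *)
Lemma Pcov_S_le lam e R0 : 0 < lam -> 0 < e < rate_infty -> h <= R0 ->
  (forall r, R0 <= r -> rate_infty - e <= rate r) ->
  2 * PI * lam * R0 ^ 2 * rate_infty <= 1 ->
  Pcov_S alpha h theta lam <= / (rate_infty - e) + 2 * PI * lam * R0 ^ 2.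
Proof.
  intros Hlam He HR0 Hrate Hsmall. pose proof PI_RGT_0.
  destruct (Pcov_S_lub lam Hlam) as [_ Hlub].
  set (c := PI * lam * (rate_infty - e)).
  assert (Hc : 0 < c) by (unfold c; apply Rmult_lt_0_compat; nra).
  assert (HR2 : 0 <= R0 ^ 2) by (apply pow_le; lra).
  assert (Hbound : Pcov_S alpha h theta lam / (2 * PI * lam)
                   <= exp (c * R0 ^ 2) * exp (- c * h ^ 2) / (2 * c)).
  { apply Hlub. intros y [T [HT ->]].
    apply RInt_le_gauss; [exact Hc | intros; apply continuous_Pcov_S_integrand; lra
                         | left; apply exp_pos | | exact HT].
    intros r Hr. apply Pcov_S_integrand_le; [exact Hlam | exact Hc | lra |].
    intros r' Hr'. unfold c. apply Rmult_le_compat_l; [nra | apply Hrate, Hr']. }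
  apply (Rmult_le_compat_l (2 * PI * lam)) in Hbound; [| nra].
  replace (2 * PI * lam * (Pcov_S alpha h theta lam / (2 * PI * lam)))
    with (Pcov_S alpha h theta lam) in Hbound by (field; nra).
  replace (2 * PI * lam * (exp (c * R0 ^ 2) * exp (- c * h ^ 2) / (2 * c)))
    with (/ (rate_infty - e) * (exp (c * R0 ^ 2) * exp (- c * h ^ 2))) in Hbound
    by (unfold c; field; split; lra).
  assert (Hx : 0 <= c * R0 ^ 2 <= 1 / 2).
  { split; [apply Rmult_le_pos; lra |].
    assert (c <= PI * lam * rate_infty) by (unfold c; apply Rmult_le_compat_l; nra).
    assert (c * R0 ^ 2 <= PI * lam * rate_infty * R0 ^ 2) by (apply Rmult_le_compat_r; lra).
    lra. }
  pose proof (exp_le_1_plus_2x _ Hx). pose proof (exp_pos (- c * h ^ 2)).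
  pose proof (exp_le_compat (- c * h ^ 2) 0 ltac:(nra)). rewrite exp_0 in *.
  pose proof (Rinv_0_lt_compat (rate_infty - e) ltac:(lra)).
  assert (/ (rate_infty - e) * (c * R0 ^ 2) = PI * lam * R0 ^ 2) by (unfold c; field; lra).
  assert (exp (c * R0 ^ 2) * exp (- c * h ^ 2) <= 1 + 2 * (c * R0 ^ 2)).
  { pose proof (exp_pos (c * R0 ^ 2)). nra. }
  nra.
Qed.

Lemma Pcov_S_lambda0 eps : 0 < eps -> exists delta, 0 < delta /\ forall lam, 0 < lam < delta ->
  Rabs (Pcov_S alpha h theta lam - / rate_infty) < eps.
Proof.
  intros He. pose proof PI_RGT_0. pose proof rate_infty_gt0 as HQ.
  set (e := Rmin (rate_infty / 2) (eps * rate_infty ^ 2 / 8)).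
  assert (He0 : 0 < e).
  { apply Rmin_pos; [lra |]. apply Rdiv_lt_0_compat; [apply Rmult_lt_0_compat, pow_lt |]; lra. }
  assert (He1 : e <= rate_infty / 2) by apply Rmin_l.
  assert (He2 : e <= eps * rate_infty ^ 2 / 8) by apply Rmin_r.
  assert (Herr : / (rate_infty - e) - / rate_infty <= eps / 4).
  { eapply Rle_trans; [apply Rinv_minus_Rinv_le; lra |].
    apply Rmult_le_reg_r with (rate_infty ^ 2); [apply pow_lt; lra |].
    unfold Rdiv. rewrite Rmult_assoc, Rinv_l, Rmult_1_r by (apply Rgt_not_eq, pow_lt; lra).
    unfold Rdiv in He2. nra. }
  destruct (rate_tendsto e He0) as [R0 [HR0 Hrate]].
  assert (HR2 : 0 < R0 ^ 2) by (apply pow_lt; lra).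
  set (k1 := PI * h ^ 2). set (k2 := 4 * PI * R0 ^ 2). set (k3 := 2 * PI * R0 ^ 2 * rate_infty).
  assert (Hk : 0 < k1 /\ 0 < k2 /\ 0 < k3).
  { pose proof (pow_lt h 2 hh). assert (0 < PI * R0 ^ 2) by (apply Rmult_lt_0_compat; lra).
    unfold k1, k2, k3. repeat split; nra. }
  exists (Rmin (eps / k1) (Rmin (eps / k2) (/ k3))).
  split; [repeat apply Rmin_pos; try apply Rdiv_lt_0_compat; try apply Rinv_0_lt_compat; lra |].
  intros lam [Hl0 Hl].
  pose proof (Rmin_l (eps / k1) (Rmin (eps / k2) (/ k3))).
  pose proof (Rmin_r (eps / k1) (Rmin (eps / k2) (/ k3))).
  pose proof (Rmin_l (eps / k2) (/ k3)). pose proof (Rmin_r (eps / k2) (/ k3)).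
  assert (Hl1 : lam * k1 < eps) by (apply Rlt_div_r; lra).
  assert (Hl2 : lam * k2 < eps) by (apply Rlt_div_r; lra).
  assert (Hl3 : lam * k3 < 1) by (apply Rlt_div_r; [| unfold Rdiv; rewrite Rmult_1_l]; lra).
  pose proof (Pcov_S_ge lam Hl0).
  pose proof (Pcov_S_le lam e R0 Hl0 ltac:(lra) HR0 Hrate ltac:(unfold k3 in Hl3; lra)).
  unfold k1, k2 in *. apply Rabs_lt_between. split; lra.
Qed.

Lemma Pcov_S_lambda_infty eps : 0 < eps -> exists M, forall lam, M < lam ->
  Rabs (Pcov_S alpha h theta lam) < eps.
Proof.
  intros He. pose proof PI_RGT_0. pose proof (rate_gt0 h) as HQ.
  assert (Hh2 : 0 < h ^ 2) by (apply pow_lt; lra).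
  set (k := eps * PI * rate h ^ 2 * h ^ 2).
  assert (Hk : 0 < k).
  { pose proof (pow_lt _ 2 HQ). unfold k.
    apply Rmult_lt_0_compat; [apply Rmult_lt_0_compat; [apply Rmult_lt_0_compat |] |]; lra. }
  exists (/ k). intros lam Hl.
  assert (Hlam : 0 < lam) by (pose proof (Rinv_0_lt_compat _ Hk); lra).
  destruct (Pcov_S_lub lam Hlam) as [Hub Hlub].
  set (c := PI * lam * rate h).
  assert (Hc : 0 < c) by (unfold c; apply Rmult_lt_0_compat; [nra | exact HQ]).
  assert (Hge : 0 <= Pcov_S alpha h theta lam / (2 * PI * lam)).
  { replace 0 with (RInt (Pcov_S_integrand lam) h h) by exact (RInt_point h _).
    apply Hub. exists h. split; [lra | reflexivity]. }
  assert (Hle : Pcov_S alpha h theta lam / (2 * PI * lam) <= exp (- c * h ^ 2) / (2 * c)).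
  { apply Hlub. intros y [T [HT ->]]. apply RInt_Pcov_S_integrand_le; assumption. }
  assert (HP : Pcov_S alpha h theta lam
               = 2 * PI * lam * (Pcov_S alpha h theta lam / (2 * PI * lam)))
    by (field; nra).
  pose proof (exp_neg_lt_inv (c * h ^ 2) ltac:(apply Rmult_lt_0_compat; lra)).
  replace (- c * h ^ 2) with (- (c * h ^ 2)) in Hle by ring.
  assert (Hlk : 1 < lam * k)
    by (apply Rmult_lt_compat_r with (r := k) in Hl; [rewrite Rinv_l in Hl |]; lra).
  assert (Hbound : 2 * PI * lam * (exp (- (c * h ^ 2)) / (2 * c)) < eps).
  { replace (2 * PI * lam * (exp (- (c * h ^ 2)) / (2 * c))) with (exp (- (c * h ^ 2)) / rate h)
      by (unfold c; field; nra).
    assert (HxQ : c * h ^ 2 * (eps * rate h) = lam * k) by (unfold c, k; ring).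
    apply Rlt_div_l; [exact HQ |]. eapply Rlt_trans; [eassumption |].
    apply Rmult_lt_reg_l with (c * h ^ 2); [apply Rmult_lt_0_compat; lra |].
    rewrite Rinv_r by (apply Rgt_not_eq, Rmult_lt_0_compat; lra). lra. }
  rewrite Rabs_pos_eq, HP by (rewrite HP; apply Rmult_le_pos; nra).
  eapply Rle_lt_trans; [| exact Hbound]. apply Rmult_le_compat_l; nra.
Qed.

End Coverage.

Theorem lemma3 (h alpha theta : R) (hh : 0 < h) (halpha : 2 < alpha)
  (htheta : 0 < theta) :
  (* (i) *)
  (forall eps, 0 < eps -> exists delta, 0 < delta /\
     forall lambda, 0 < lambda < delta ->
       Rabs (Pcov_C alpha h theta lambda - / (psi alpha theta + 1)) < eps) /\
  (* (ii) *)
  (1 <= theta ->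
   forall eps, 0 < eps -> exists delta, 0 < delta /\
     forall lambda, 0 < lambda < delta ->
       Rabs (Pcov_S alpha h theta lambda -
             alpha * sin (2 * PI / alpha) / (2 * PI * Rpower theta (2 / alpha))) < eps) /\
  (* (iii) *)
  (forall eps, 0 < eps -> exists M, forall lambda, M < lambda ->
       Rabs (Pcov_C alpha h theta lambda) < eps) /\
  (1 <= theta ->
   forall eps, 0 < eps -> exists M, forall lambda, M < lambda ->
       Rabs (Pcov_S alpha h theta lambda) < eps).
Proof.
  split; [| split; [| split]].
  - intros eps He. apply Pcov_C_lambda0; assumption.
  - intros _ eps He. rewrite <- Rinv_rate_infty by assumption. apply Pcov_S_lambda0; assumption.
  - intros eps He. apply Pcov_C_lambda_infty; assumption.
  - intros _ eps He. apply Pcov_S_lambda_infty; assumption.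
Qed.
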